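(* (i) For positive real numbers $a\ne b$, \[ \left[\frac{\Gamma(b)}{\Gamma(a)}\right]^{1/(b-a)}<\sqrt{ab}\,\left(\frac{a}{b}\right)^{1/(2(b-a))} \] holds if $0<|b-a|<1$, and the reverse strict inequality holds if $|b-a|>1$. (ii) Let $c\ne 0$ be real, and let $\beta,\gamma$ be real parameters. Consider the double inequality \[ \frac{(k-1)!}{2}\left[\left(\frac{1}{b-a}+\beta\right)\frac{1}{a^k}+\left(\beta-\frac{1}{b-a}\right)\frac{1}{b^k}\right] <\frac{(-1)^{k-1}\left[\psi^{(k-1)}(b)-\psi^{(k-1)}(a)\right]}{b-a} <\frac{(k-1)!}{2}\left[\left(\frac{1}{b-a}+\gamma\right)\frac{1}{a^k}+\left(\gamma-\frac{1}{b-a}\right)\frac{1}{b^k}\right]. \] If $0<|c|<1$, this double inequality holds for all $k\in\mathbb{N}$ and all positive $a,b$ with $b-a=c$ if and only if $\beta\le 1$ and $\gamma\ge\frac{1}{|c|}$. If $|c|>1$, it holds for all $k\in\mathbb{N}$ and all positive $a,b$ with $b-a=c$ if and only if $\beta\le\frac{1}{|c|}$ and $\gamma\ge 1$.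
   Context: $\Gamma$ is Euler's gamma function, $\psi=\Gamma'/\Gamma$ is the digamma function, $\psi^{(0)}=\psi$ and $\psi^{(m)}$ denotes its $m$-th derivative; $\mathbb{N}=\{1,2,\dots\}$. Here $\gamma$ denotes a real parameter, not Euler's constant. *)

From Stdlib Require Import Reals Factorial.
From Coquelicot Require Import Coquelicot.
Open Scope R_scope.

(* Euler's Gamma function, by Euler's integral
   Gamma x = int_0^oo t^(x-1) e^(-t) dt  (meaningful for x > 0, which is all we use). *)
Definition Gamma (x : R) : R :=
  RInt_gen (fun t => Rpower t (x - 1) * exp (- t))
           (at_right 0) (Rbar_locally p_infty).

Definition digamma (x : R) : R := Derive Gamma x / Gamma x.

Definition polygamma (m : nat) (x : R) : R := Derive_n digamma m x.

Definition double_ineq (k : nat) (a b beta gam : R) : Prop :=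
  INR (fact (k - 1)) / 2 *
    ((1 / (b - a) + beta) * / a ^ k + (beta - 1 / (b - a)) * / b ^ k)
  < (-1) ^ (k - 1) * (polygamma (k - 1) b - polygamma (k - 1) a) / (b - a)
  /\
  (-1) ^ (k - 1) * (polygamma (k - 1) b - polygamma (k - 1) a) / (b - a)
  < INR (fact (k - 1)) / 2 *
    ((1 / (b - a) + gam) * / a ^ k + (gam - 1 / (b - a)) * / b ^ k).

Definition holds_all (c beta gam : R) : Prop :=
  forall (k : nat) (a b : R), (1 <= k)%nat -> 0 < a -> 0 < b -> b - a = c ->
    double_ineq k a b beta gam.

(* Everything rests on Gamma (x + 1) = x Gamma x and the log-convexity of Gamma, both read
   off Euler's integral.  Comparing chord slopes of ln Gamma gives Wendel's bounds
   c ln (y - 1) <= ln Gamma (y + c) - ln Gamma y <= c ln (y + c), hence Gauss's limit formula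
   for ln Gamma with an O(1/n) error; its first-order Taylor errors are uniformly O(h^2), so
   it may be differentiated termwise, and
   (-1)^m (psi^(m) b - psi^(m) a) / m! = sum_j ((a + j)^-(m+1) - (b + j)^-(m+1)).
   Telescoping over x = a, a + 1, a + 2, ... then writes both parts as series of the
   four-point combinations
   (1 - s) f x - (1 + s) f (x + c) + (1 + s) f (x + 1) - (1 - s) f (x + 1 + c)
   with f = t^-(m+1) (part ii, s = c t) or f = - ln t (part i, s = c).  When f'' is
   decreasing, convexity of s |-> f (y - s) - f (y + s) makes the combination at s = c
   positive for c < 1 and negative for c > 1; at s = 1 it is 2 (f (x + 1) - f (x + c)),
   and for decreasing f it decreases in s.  Sharpness of the constants in (ii) is seen
   at k = 1, letting a -> oo (at s = c the series is O(a^-3)) or a -> 0. *)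

From Stdlib Require Import Reals Lra Lia Factorial.
From Coquelicot Require Import Coquelicot.
Open Scope R_scope.

Lemma ex_RInt_continuous_R (f : R -> R) a b :
  (forall z, Rmin a b <= z <= Rmax a b -> continuous f z) -> ex_RInt f a b.
Proof. exact (ex_RInt_continuous (V := R_CompleteNormedModule) f a b). Qed.

Lemma continuous_of_ex_derive (f : R -> R) x : ex_derive f x -> continuous f x.
Proof. exact (ex_derive_continuous (K := R_AbsRing) (V := R_NormedModule) f x). Qed.

Lemma is_RInt_derive_R (f df : R -> R) a b :
  (forall x, Rmin a b <= x <= Rmax a b -> is_derive f x (df x)) ->
  (forall x, Rmin a b <= x <= Rmax a b -> continuous df x) ->
  is_RInt df a b (f b - f a).
Proof. exact (is_RInt_derive (V := R_CompleteNormedModule) f df a b). Qed.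

Lemma RInt_Chasles_R (f : R -> R) a b c :
  ex_RInt f a b -> ex_RInt f b c -> RInt f a b + RInt f b c = RInt f a c.
Proof. exact (RInt_Chasles (V := R_CompleteNormedModule) f a b c). Qed.

Lemma RInt_lin_comb (f g : R -> R) p q u v : ex_RInt f u v -> ex_RInt g u v ->
  RInt (fun t => p * f t + q * g t) u v = p * RInt f u v + q * RInt g u v.
Proof.
  intros Hf Hg.
  assert (Hpf : ex_RInt (fun t => scal p (f t)) u v)
    by (apply (ex_RInt_scal (V := R_CompleteNormedModule)); auto).
  assert (Hqg : ex_RInt (fun t => scal q (g t)) u v)
    by (apply (ex_RInt_scal (V := R_CompleteNormedModule)); auto).
  assert (E := RInt_plus (V := R_CompleteNormedModule) _ _ u v Hpf Hqg).
  rewrite !(RInt_scal (V := R_CompleteNormedModule)) in E by auto. exact E.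
Qed.

Lemma locally_of_pos x (P : R -> Prop) : 0 < x -> (forall t, 0 < t -> P t) -> locally x P.
Proof.
  intros Hx H. exists (mkposreal x Hx). intros t Ht. apply H.
  apply Rabs_lt_between' in Ht. simpl in Ht. lra.
Qed.

Lemma ln1p_le u : -1 < u -> ln (1 + u) <= u.
Proof. intros Hu. generalize (exp_ineq1_le (ln (1 + u))). rewrite exp_ln by lra. lra. Qed.

Lemma ln1p_nonneg u : 0 <= u -> 0 <= ln (1 + u).
Proof. intros Hu. rewrite <- ln_1. apply ln_le; lra. Qed.

Lemma exp_convex lam p q : 0 <= lam <= 1 ->
  exp (lam * p + (1 - lam) * q) <= lam * exp p + (1 - lam) * exp q.
Proof.
  intros Hl. set (m := lam * p + (1 - lam) * q).
  assert (tangent : forall r, exp m * (1 + (r - m)) <= exp r).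
  { intros r. replace r with (m + (r - m)) at 2 by ring. rewrite exp_plus.
    apply Rmult_le_compat_l; [left; apply exp_pos | apply exp_ineq1_le]. }
  assert (lam * (exp m * (1 + (p - m))) + (1 - lam) * (exp m * (1 + (q - m))) = exp m)
    by (unfold m; ring).
  generalize (tangent p) (tangent q); nra.
Qed.

Lemma pow_succ_lt_compat s t n : 0 <= s < t -> s ^ S n < t ^ S n.
Proof.
  intros H. induction n; [simpl; lra|].
  change (s * s ^ S n < t * t ^ S n).
  assert (0 <= s ^ S n) by (apply pow_le; lra). nra.
Qed.

Lemma inv_pow_succ_lt_contravar s t n : 0 < s < t -> / t ^ S n < / s ^ S n.
Proof.
  intros H. apply Rinv_lt_contravar.
  - apply Rmult_lt_0_compat; apply pow_lt; lra.
  - apply pow_succ_lt_compat; lra.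
Qed.

Lemma is_lim_seq_INR_succ : is_lim_seq (fun n => INR n + 1) p_infty.
Proof.
  apply (is_lim_seq_plus _ _ p_infty 1 p_infty);
    [apply is_lim_seq_INR | apply is_lim_seq_const | reflexivity].
Qed.

Lemma is_lim_seq_inv_one_plus (w : nat -> R) (K : R) : 0 < K -> is_lim_seq w p_infty ->
  is_lim_seq (fun n => / (1 + K * w n)) 0.
Proof.
  intros HK Hw.
  assert (H : is_lim_seq (fun n => 1 + K * w n) p_infty).
  { apply (is_lim_seq_plus _ _ 1 p_infty p_infty); [apply is_lim_seq_const | | reflexivity].
    apply (is_lim_seq_scal_l _ K p_infty) in Hw.
    replace (Rbar_mult K p_infty) with p_infty in Hw; auto.
    simpl. unfold Rbar_mult'. destruct (Rle_dec 0 K); [|lra].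
    destruct (Rle_lt_or_eq_dec 0 K r); [auto | lra]. }
  apply (is_lim_seq_inv _ _ H). discriminate.
Qed.

Lemma is_lim_seq_squeeze_0 (a b : nat -> R) :
  (forall n, 0 <= a n <= b n) -> is_lim_seq b 0 -> is_lim_seq a 0.
Proof.
  intros H Hb. apply is_lim_seq_le_le with (u := fun _ => 0) (w := b); auto.
  apply is_lim_seq_const.
Qed.

Lemma is_lim_seq_of_dist_le (u : nat -> R) (l K : R) :
  (forall n, Rabs (u n - l) <= K / (INR n + 1)) -> is_lim_seq u l.
Proof.
  intros H.
  assert (H0 : is_lim_seq (fun n => K / (INR n + 1)) 0).
  { replace 0 with (K * 0) by ring.
    apply (is_lim_seq_scal_l _ K 0 (is_lim_seq_inv _ _ is_lim_seq_INR_succ ltac:(discriminate))). }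
  apply is_lim_seq_le_le
    with (u := fun n => l - K / (INR n + 1)) (w := fun n => l + K / (INR n + 1)).
  - intros n. specialize (H n). apply Rabs_le_between' in H. lra.
  - replace (Finite l) with (Finite (l - 0)) by (f_equal; ring).
    apply is_lim_seq_minus'; [apply is_lim_seq_const | auto].
  - replace (Finite l) with (Finite (l + 0)) by (f_equal; ring).
    apply is_lim_seq_plus'; [apply is_lim_seq_const | auto].
Qed.

Fixpoint partial_sum (f : nat -> R) (n : nat) : R :=
  match n with O => 0 | S n => partial_sum f n + f n end.

Lemma partial_sum_ext f g n :
  (forall j, (j < n)%nat -> f j = g j) -> partial_sum f n = partial_sum g n.
Proof. induction n; simpl; intros H; auto. rewrite IHn, H; auto. Qed.

Lemma partial_sum_scal a f n : partial_sum (fun j => a * f j) n = a * partial_sum f n.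
Proof. induction n; simpl; [ring | rewrite IHn; ring]. Qed.

Lemma partial_sum_minus f g n :
  partial_sum (fun j => f j - g j) n = partial_sum f n - partial_sum g n.
Proof. induction n; simpl; [ring | rewrite IHn; ring]. Qed.

Lemma partial_sum_le f g n :
  (forall j, (j < n)%nat -> f j <= g j) -> partial_sum f n <= partial_sum g n.
Proof. induction n; simpl; intros H; [lra | apply Rplus_le_compat; auto]. Qed.

Lemma partial_sum_abs_le f n :
  Rabs (partial_sum f n) <= partial_sum (fun j => Rabs (f j)) n.
Proof.
  induction n; simpl; [rewrite Rabs_R0; lra|].
  eapply Rle_trans; [apply Rabs_triang | lra].
Qed.

Lemma partial_sum_telescope (g : nat -> R) n :
  partial_sum (fun j => g j - g (S j)) n = g O - g n.
Proof. induction n; simpl; [ring | rewrite IHn; ring]. Qed.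

Lemma first_term_le_series (d : nat -> R) (l : R) : (forall j, 0 < d j) ->
  is_lim_seq (partial_sum d) l -> d O <= l.
Proof.
  intros Hd Hl. apply is_lim_seq_incr_1 in Hl.
  assert (H : forall n, d O <= partial_sum d (S n)).
  { induction n; simpl in *; [lra | specialize (Hd (S n)); lra]. }
  exact (is_lim_seq_le _ _ _ _ H (is_lim_seq_const _) Hl).
Qed.

Lemma series_le_first_term (d : nat -> R) (l : R) : (forall j, d j < 0) ->
  is_lim_seq (partial_sum d) l -> l <= d O.
Proof.
  intros Hd Hl.
  assert (H := first_term_le_series (fun j => - d j) (- l) ltac:(intros j; specialize (Hd j); lra)).
  enough (- d O <= - l) by lra. apply H.
  apply is_lim_seq_ext with (fun n => -1 * partial_sum d n).
  { intros n. rewrite <- partial_sum_scal. apply partial_sum_ext. intros; ring. }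
  replace (- l) with (-1 * l) by ring. apply (is_lim_seq_scal_l _ (-1) l Hl).
Qed.

Section SecondOrder.
Variables (f f1 f2 : R -> R) (lo hi : R).
Hypothesis Hf1 : forall t, lo < t < hi -> is_derive f t (f1 t).
Hypothesis Hf2 : forall t, lo < t < hi -> is_derive f1 t (f2 t).

Lemma taylor2_mean_value x y : lo < x < hi -> lo < y < hi -> x <> y ->
  exists xi eta, lo < eta < hi /\ 0 <= (y - x) * (xi - x) <= (y - x) ^ 2 /\
    f y - f x - (y - x) * f1 x = (y - x) * (xi - x) * f2 eta.
Proof.
  intros Hx Hy Hxy.
  assert (Hd1 : forall t, Rmin x y <= t <= Rmax x y -> derivable_pt_lim f t (f1 t)).
  { intros t Ht. apply is_derive_Reals, Hf1.
    generalize (Rmin_glb_lt _ _ _ (proj1 Hx) (proj1 Hy)) (Rmax_lub_lt _ _ _ (proj2 Hx) (proj2 Hy)).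
    lra. }
  assert (Hd2 : forall t, Rmin x y <= t <= Rmax x y -> derivable_pt_lim f1 t (f2 t)).
  { intros t Ht. apply is_derive_Reals, Hf2.
    generalize (Rmin_glb_lt _ _ _ (proj1 Hx) (proj1 Hy)) (Rmax_lub_lt _ _ _ (proj2 Hx) (proj2 Hy)).
    lra. }
  destruct (Rlt_or_le x y) as [Hlt | Hle].
  - rewrite Rmin_left, Rmax_right in Hd1, Hd2 by lra.
    destruct (MVT_cor2 f f1 x y Hlt) as [xi [E Hxi]]; [intros; apply Hd1; lra|].
    destruct (MVT_cor2 f1 f2 x xi) as [eta [E2 Heta]]; [lra | intros; apply Hd2; lra |].
    exists xi, eta. split; [lra | split; [simpl; split; nra |]].
    replace (f y - f x) with (f1 xi * (y - x)) by lra.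
    replace (f1 xi) with (f1 x + f2 eta * (xi - x)) by lra. ring.
  - rewrite Rmin_right, Rmax_left in Hd1, Hd2 by lra.
    destruct (MVT_cor2 f f1 y x ltac:(lra)) as [xi [E Hxi]]; [intros; apply Hd1; lra|].
    destruct (MVT_cor2 f1 f2 xi x) as [eta [E2 Heta]]; [lra | intros; apply Hd2; lra |].
    exists xi, eta. split; [lra | split; [simpl; split; nra |]].
    replace (f y - f x) with (- (f1 xi * (x - y))) by lra.
    replace (f1 xi) with (f1 x - f2 eta * (x - xi)) by lra. ring.
Qed.

Lemma taylor2_error_le M x y :
  (forall t, lo < t < hi -> Rabs (f2 t) <= M) -> lo < x < hi -> lo < y < hi ->
  Rabs (f y - f x - (y - x) * f1 x) <= M * (y - x) ^ 2.
Proof.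
  intros HM Hx Hy.
  assert (HM0 : 0 <= M) by (apply Rle_trans with (Rabs (f2 x)); [apply Rabs_pos | auto]).
  destruct (Req_dec x y) as [<- | Hxy].
  - replace (f x - f x - (x - x) * f1 x) with 0 by ring. rewrite Rabs_R0. nra.
  - destruct (taylor2_mean_value x y Hx Hy Hxy) as [xi [eta [Heta [Hw E]]]].
    rewrite E, Rabs_mult, (Rabs_right ((y - x) * (xi - x))) by lra.
    specialize (HM eta Heta). generalize (Rabs_pos (f2 eta)). nra.
Qed.

End SecondOrder.

Lemma is_derive_of_quadratic_error (F : R -> R) (D x d M : R) :
  0 < d -> 0 <= M ->
  (forall y, Rabs (y - x) < d -> Rabs (F y - F x - (y - x) * D) <= M * (y - x) ^ 2) ->
  is_derive F x D.
Proof.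
  intros Hd HM HQ. apply is_derive_Reals. intros eps Heps.
  assert (Hp : 0 < Rmin d (eps / (M + 1))) by (apply Rmin_pos; [lra | apply Rdiv_lt_0_compat; lra]).
  exists (mkposreal _ Hp). intros h Hh0 Hh. simpl in Hh.
  assert (Hh1 : Rabs h < d) by (eapply Rlt_le_trans; [apply Hh | apply Rmin_l]).
  assert (Hh2 : Rabs h < eps / (M + 1)) by (eapply Rlt_le_trans; [apply Hh | apply Rmin_r]).
  specialize (HQ (x + h)). replace (x + h - x) with h in HQ by ring. specialize (HQ Hh1).
  assert (Hah : 0 < Rabs h) by (apply Rabs_pos_lt; auto).
  replace ((F (x + h) - F x) / h - D) with ((F (x + h) - F x - h * D) / h) by (field; auto).
  rewrite Rabs_div by auto.
  apply Rle_lt_trans with (M * Rabs h).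
  { apply Rmult_le_reg_r with (Rabs h); auto. unfold Rdiv.
    rewrite Rmult_assoc, Rinv_l, Rmult_1_r by lra.
    replace (M * Rabs h * Rabs h) with (M * h ^ 2); auto.
    rewrite Rmult_assoc, <- Rabs_mult, Rabs_right by nra. ring. }
  apply Rle_lt_trans with ((M + 1) * Rabs h); [nra|].
  apply Rmult_lt_reg_r with (/ (M + 1)); [apply Rinv_0_lt_compat; lra|].
  replace ((M + 1) * Rabs h * / (M + 1)) with (Rabs h) by (field; lra). exact Hh2.
Qed.

Section UniformQuadraticError.
Variables (Fn Dn : nat -> R -> R) (F : R -> R) (x d M : R).
Hypothesis Hd : 0 < d.
Hypothesis HM : 0 <= M.
Hypothesis Hlim : forall y, Rabs (y - x) < d -> is_lim_seq (fun n => Fn n y) (F y).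
Hypothesis HQ : forall n y, Rabs (y - x) < d ->
  Rabs (Fn n y - Fn n x - (y - x) * Dn n x) <= M * (y - x) ^ 2.

Lemma quadratic_error_cauchy : ex_lim_seq_cauchy (fun n => Dn n x).
Proof.
  intros eps.
  set (h := Rmin (d / 2) (eps / (4 * (M + 1)))).
  assert (Hh : 0 < h) by (apply Rmin_pos; [lra | apply Rdiv_lt_0_compat; [apply cond_pos | lra]]).
  assert (Hhd : Rabs (x + h - x) < d).
  { replace (x + h - x) with h by ring. rewrite Rabs_right by lra.
    apply Rle_lt_trans with (d / 2); [apply Rmin_l | lra]. }
  assert (HhM : 2 * M * h <= eps / 2).
  { assert (h <= eps / (4 * (M + 1))) by apply Rmin_r.
    assert (0 < eps) by apply cond_pos.
    apply Rle_trans with (2 * (M + 1) * (eps / (4 * (M + 1)))).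
    { apply Rle_trans with (2 * (M + 1) * h); [nra | apply Rmult_le_compat_l; lra]. }
    right. field. lra. }
  set (Q := fun n => (Fn n (x + h) - Fn n x) / h).
  assert (HQl : is_lim_seq Q ((F (x + h) - F x) / h)).
  { apply is_lim_seq_scal_r with (a := / h) (lu := F (x + h) - F x).
    apply is_lim_seq_minus'; apply Hlim; auto. rewrite Rminus_diag, Rabs_R0; lra. }
  assert (He4 : 0 < eps / 4) by (generalize (cond_pos eps); lra).
  destruct (proj2 (is_lim_seq_spec _ _) HQl (mkposreal _ He4)) as [N HN].
  assert (HDQ : forall n, Rabs (Dn n x - Q n) <= M * h).
  { intros n. specialize (HQ n (x + h) Hhd). replace (x + h - x) with h in HQ by ring.
    unfold Q. replace (Dn n x - (Fn n (x + h) - Fn n x) / h)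
      with (- ((Fn n (x + h) - Fn n x - h * Dn n x) / h)) by (field; lra).
    rewrite Rabs_Ropp, Rabs_div, (Rabs_right h) by lra.
    apply Rmult_le_reg_r with h; auto. unfold Rdiv. rewrite Rmult_assoc, Rinv_l by lra. nra. }
  exists N. intros n m Hn Hm.
  generalize (HN n Hn) (HN m Hm) (HDQ n) (HDQ m). simpl.
  intros Hn' Hm' Hqn Hqm.
  replace (Dn n x - Dn m x) with ((Dn n x - Q n) - (Dn m x - Q m)
     + ((Q n - (F (x + h) - F x) / h) - (Q m - (F (x + h) - F x) / h))) by ring.
  eapply Rle_lt_trans; [apply Rabs_triang|].
  eapply Rle_lt_trans; [apply Rplus_le_compat; apply Rabs_triang|].
  rewrite !Rabs_Ropp. lra.
Qed.

Lemma is_derive_lim_of_quadratic_error :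
  exists D : R, is_lim_seq (fun n => Dn n x) D /\ is_derive F x D.
Proof.
  destruct (proj2 (ex_lim_seq_cauchy_corr _) quadratic_error_cauchy) as [D HD].
  exists D. split; auto.
  apply is_derive_of_quadratic_error with (d := d) (M := M); auto.
  intros y Hy.
  assert (Hl : is_lim_seq (fun n => Rabs (Fn n y - Fn n x - (y - x) * Dn n x))
                 (Rabs (F y - F x - (y - x) * D))).
  { apply (is_lim_seq_abs _ (F y - F x - (y - x) * D)).
    apply is_lim_seq_minus'; [apply is_lim_seq_minus'|].
    - apply Hlim; auto.
    - apply Hlim; rewrite Rminus_diag, Rabs_R0; lra.
    - apply (is_lim_seq_scal_l _ (y - x) D). auto. }
  exact (is_lim_seq_le _ _ _ _ (fun n => HQ n y Hy) Hl (is_lim_seq_const _)).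
Qed.

End UniformQuadraticError.

Definition gamma_integrand (x t : R) : R := exp ((x - 1) * ln t - t).

Definition Gamma_trunc (x : R) (n : nat) : R :=
  RInt (gamma_integrand x) (/ (INR n + 1)) (INR n + 1).

Lemma gamma_integrand_pos x t : 0 < gamma_integrand x t.
Proof. apply exp_pos. Qed.

Lemma continuous_gamma_integrand x t : 0 < t -> continuous (gamma_integrand x) t.
Proof. intros Ht. apply continuous_of_ex_derive. unfold gamma_integrand. auto_derive. lra. Qed.

Lemma ex_RInt_gamma_integrand x u v : 0 < u -> 0 < v -> ex_RInt (gamma_integrand x) u v.
Proof.
  intros Hu Hv. apply ex_RInt_continuous_R. intros z Hz. apply continuous_gamma_integrand.
  assert (0 < Rmin u v) by (apply Rmin_pos; auto). lra.
Qed.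

Lemma RInt_gamma_integrand_le x u' u v v' : 0 < u' -> u' <= u -> u <= v -> v <= v' ->
  RInt (gamma_integrand x) u v <= RInt (gamma_integrand x) u' v'.
Proof.
  intros H1 H2 H3 H4.
  assert (Hnonneg : forall s t, 0 < s <= t -> 0 <= RInt (gamma_integrand x) s t).
  { intros s t Hst. apply RInt_ge_0; [lra | apply ex_RInt_gamma_integrand; lra |].
    intros; left; apply gamma_integrand_pos. }
  rewrite <- (RInt_Chasles_R _ u' u v'), <- (RInt_Chasles_R _ u v v')
    by (apply ex_RInt_gamma_integrand; lra).
  generalize (Hnonneg u' u ltac:(lra)) (Hnonneg v v' ltac:(lra)). lra.
Qed.

Lemma Gamma_trunc_incr x n : Gamma_trunc x n <= Gamma_trunc x (S n).
Proof.
  unfold Gamma_trunc. rewrite S_INR. generalize (pos_INR n); intro.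
  apply RInt_gamma_integrand_le.
  - apply Rinv_0_lt_compat; lra.
  - apply Rinv_le_contravar; lra.
  - apply Rle_trans with 1; [rewrite <- Rinv_1; apply Rinv_le_contravar|]; lra.
  - lra.
Qed.

Lemma gamma_exponent_le_linear x :
  exists C, forall t, 1 <= t -> (x - 1) * ln t - t <= C - t / 2.
Proof.
  destruct (Rle_or_lt x 1) as [Hx | Hx].
  - exists 0. intros t Ht. assert (0 <= ln t) by (rewrite <- ln_1; apply ln_le; lra).
    assert ((x - 1) * ln t <= 0) by nra. lra.
  - set (m := 2 * (x - 1)). exists ((x - 1) * (ln m - 1)). intros t Ht.
    assert (Hm : 0 < m) by (unfold m; lra).
    assert (H1 : ln (t / m) <= t / m - 1).
    { generalize (exp_ineq1_le (ln (t / m))).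
      rewrite exp_ln by (apply Rdiv_lt_0_compat; lra). lra. }
    rewrite ln_div in H1 by lra.
    assert ((x - 1) * (t / m) = t / 2) by (unfold m; field; lra).
    assert ((x - 1) * ln t <= (x - 1) * (t / m - 1 + ln m)) by (apply Rmult_le_compat_l; lra).
    nra.
Qed.

Lemma RInt_gamma_integrand_0_1_le x u : 0 < x -> 0 < u <= 1 ->
  RInt (gamma_integrand x) u 1 <= / x.
Proof.
  intros Hx Hu.
  assert (Hprim : is_RInt (fun t => exp ((x - 1) * ln t)) u 1
                    (exp (x * ln 1) / x - exp (x * ln u) / x)).
  { apply (is_RInt_derive_R (fun t => exp (x * ln t) / x)).
    - intros t Ht. rewrite Rmin_left, Rmax_right in Ht by lra.
      auto_derive; [lra|].
      replace ((x - 1) * ln t) with (x * ln t + - ln t) by ring.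
      rewrite exp_plus, exp_Ropp, exp_ln by lra. field. split; lra.
    - intros t Ht. rewrite Rmin_left in Ht by lra. apply continuous_of_ex_derive.
      auto_derive. lra. }
  apply Rle_trans with (RInt (fun t => exp ((x - 1) * ln t)) u 1).
  - apply RInt_le; [lra | apply ex_RInt_gamma_integrand; lra | eexists; exact Hprim |].
    intros t Ht. unfold gamma_integrand. left. apply exp_increasing. lra.
  - rewrite (is_RInt_unique _ _ _ _ Hprim), ln_1, Rmult_0_r, exp_0.
    assert (0 < exp (x * ln u) / x) by (apply Rdiv_lt_0_compat; [apply exp_pos | lra]).
    unfold Rdiv in *. lra.
Qed.

Lemma RInt_gamma_integrand_1_oo_le x C v : 1 <= v ->
  (forall t, 1 <= t -> (x - 1) * ln t - t <= C - t / 2) ->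
  RInt (gamma_integrand x) 1 v <= 2 * exp C.
Proof.
  intros Hv HC.
  assert (Hprim : is_RInt (fun t => exp (C - t / 2)) 1 v
                    (- 2 * exp (C - v / 2) - - 2 * exp (C - 1 / 2))).
  { apply (is_RInt_derive_R (fun t => - 2 * exp (C - t / 2))).
    - intros t Ht. auto_derive; auto.
      replace (C + - (t * / 2)) with (C - t / 2) by (unfold Rdiv; ring). lra.
    - intros t Ht. apply continuous_of_ex_derive. auto_derive. auto. }
  apply Rle_trans with (RInt (fun t => exp (C - t / 2)) 1 v).
  - apply RInt_le; [lra | apply ex_RInt_gamma_integrand; lra | eexists; exact Hprim |].
    intros t Ht. unfold gamma_integrand.
    destruct (HC t ltac:(lra)) as [Hl | ->]; [left; apply exp_increasing; auto | lra].
  - rewrite (is_RInt_unique _ _ _ _ Hprim).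
    assert (0 < exp (C - v / 2)) by apply exp_pos.
    assert (exp (C - 1 / 2) <= exp C) by (left; apply exp_increasing; lra).
    lra.
Qed.

Lemma Gamma_trunc_bounded x : 0 < x -> exists B, forall n, Gamma_trunc x n <= B.
Proof.
  intros Hx. destruct (gamma_exponent_le_linear x) as [C HC].
  exists (/ x + 2 * exp C). intros n. unfold Gamma_trunc.
  generalize (pos_INR n); intro.
  assert (Hu : 0 < / (INR n + 1) <= 1).
  { split; [apply Rinv_0_lt_compat; lra | rewrite <- Rinv_1; apply Rinv_le_contravar; lra]. }
  rewrite <- (RInt_Chasles_R _ _ 1) by (apply ex_RInt_gamma_integrand; lra).
  generalize (RInt_gamma_integrand_0_1_le x _ Hx Hu)
    (RInt_gamma_integrand_1_oo_le x C (INR n + 1) ltac:(lra) HC).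
  lra.
Qed.

Lemma ex_finite_lim_Gamma_trunc x : 0 < x -> exists l : R, is_lim_seq (Gamma_trunc x) l.
Proof.
  intros Hx. destruct (Gamma_trunc_bounded x Hx) as [B HB].
  assert (Hc := Lim_seq_correct _ (ex_lim_seq_incr _ (Gamma_trunc_incr x))).
  assert (Hup := is_lim_seq_le _ _ _ _ HB Hc (is_lim_seq_const B)).
  assert (H0 : forall n, Gamma_trunc x 0 <= Gamma_trunc x n).
  { induction n; [lra | eapply Rle_trans; [apply IHn | apply Gamma_trunc_incr]]. }
  assert (Hlow := is_lim_seq_le _ _ _ _ H0 (is_lim_seq_const _) Hc).
  destruct (Lim_seq (Gamma_trunc x)) as [l | |]; simpl in Hup, Hlow; try contradiction.
  exists l. auto.
Qed.

Lemma RInt_gamma_integrand_le_lim x (l : R) u v :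
  is_lim_seq (Gamma_trunc x) l -> 0 < u -> u <= v -> RInt (gamma_integrand x) u v <= l.
Proof.
  intros Hl Hu Huv.
  destruct (INR_archimed 1 (Rmax v (/ u)) ltac:(lra)) as [N HN].
  apply Rle_trans with (Gamma_trunc x N);
    [| apply (is_lim_seq_incr_compare _ _ Hl (Gamma_trunc_incr x))].
  generalize (pos_INR N) (Rmax_l v (/ u)) (Rmax_r v (/ u)); intros.
  apply RInt_gamma_integrand_le; try lra.
  - apply Rinv_0_lt_compat; lra.
  - rewrite <- (Rinv_inv u). apply Rinv_le_contravar; [apply Rinv_0_lt_compat|]; lra.
Qed.

Lemma is_RInt_gen_gamma_integrand x (l : R) : is_lim_seq (Gamma_trunc x) l ->
  is_RInt_gen (gamma_integrand x) (at_right 0) (Rbar_locally p_infty) l.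
Proof.
  intros Hl P [eps Heps].
  destruct (proj2 (is_lim_seq_spec _ _) Hl eps) as [N HN].
  specialize (HN N (Nat.le_refl _)). simpl in HN. apply Rabs_lt_between' in HN.
  generalize (pos_INR N); intro.
  assert (HN1 : 0 < / (INR N + 1)) by (apply Rinv_0_lt_compat; lra).
  assert (HN2 : / (INR N + 1) <= 1) by (rewrite <- Rinv_1; apply Rinv_le_contravar; lra).
  apply Filter_prod with (Q := fun u => 0 < u <= / (INR N + 1)) (R := fun v => INR N + 1 <= v).
  - exists (mkposreal _ HN1). intros y Hy Hy0. apply Rabs_lt_between' in Hy. simpl in Hy. lra.
  - exists (INR N + 1). intros; lra.
  - intros u v Hu Hv. exists (RInt (gamma_integrand x) u v). split.
    + apply (RInt_correct (V := R_CompleteNormedModule)). apply ex_RInt_gamma_integrand; lra.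
    + apply Heps. change (Rabs (RInt (gamma_integrand x) u v - l) < eps).
      assert (Hup := RInt_gamma_integrand_le_lim x l u v Hl ltac:(lra) ltac:(lra)).
      assert (Hlow : Gamma_trunc x N <= RInt (gamma_integrand x) u v)
        by (apply RInt_gamma_integrand_le; lra).
      apply Rabs_lt_between'. lra.
Qed.

Lemma is_lim_seq_Gamma_trunc x : 0 < x -> is_lim_seq (Gamma_trunc x) (Gamma x).
Proof.
  intros Hx. destruct (ex_finite_lim_Gamma_trunc x Hx) as [l Hl].
  replace (Gamma x) with l; auto.
  symmetry. unfold Gamma. apply (is_RInt_gen_unique (V := R_CompleteNormedModule)).
  apply (is_RInt_gen_ext (V := R_CompleteNormedModule) (gamma_integrand x));
    [| apply is_RInt_gen_gamma_integrand; auto].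
  apply Filter_prod with (Q := fun u => 0 < u) (R := fun v => 0 < v).
  - exists (mkposreal 1 Rlt_0_1). intros; auto.
  - exists 0. auto.
  - intros u v Hu Hv t Ht. unfold gamma_integrand, Rpower. rewrite <- exp_plus. reflexivity.
Qed.

Lemma Gamma_pos x : 0 < x -> 0 < Gamma x.
Proof.
  intros Hx.
  eapply Rlt_le_trans;
    [| apply (is_lim_seq_incr_compare _ _ (is_lim_seq_Gamma_trunc x Hx) (Gamma_trunc_incr x) 1)].
  assert (0 < / (INR 1 + 1) < INR 1 + 1) by (simpl; split; [apply Rinv_0_lt_compat |]; lra).
  apply RInt_gt_0; [lra | intros; apply gamma_integrand_pos |].
  intros t Ht. apply continuous_gamma_integrand. lra.
Qed.

Lemma Gamma_trunc_succ x n : 0 < x ->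
  Gamma_trunc (x + 1) n = x * Gamma_trunc x n
    + exp (x * ln (/ (INR n + 1)) - / (INR n + 1)) - exp (x * ln (INR n + 1) - (INR n + 1)).
Proof.
  intros Hx. unfold Gamma_trunc. generalize (pos_INR n); intro.
  set (u := / (INR n + 1)). set (v := INR n + 1).
  assert (Hu : 0 < u) by (apply Rinv_0_lt_compat; lra).
  assert (Hv : 0 < v) by (unfold v; lra).
  assert (Hmin : 0 < Rmin u v) by (apply Rmin_pos; auto).
  assert (Hparts : RInt (fun t => x * gamma_integrand x t + -1 * gamma_integrand (x + 1) t) u v
                   = exp (x * ln v - v) - exp (x * ln u - u)).
  { apply is_RInt_unique, (is_RInt_derive_R (fun t => exp (x * ln t - t))).
    - intros t Ht. auto_derive; [lra|]. unfold gamma_integrand.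
      replace (x + 1 - 1) with x by ring.
      replace ((x - 1) * ln t - t) with ((x * ln t - t) + - ln t) by ring.
      rewrite (exp_plus (x * ln t - t) (- ln t)), exp_Ropp, exp_ln by lra.
      replace (x * ln t + - t) with (x * ln t - t) by ring. field. lra.
    - intros t Ht. apply continuous_of_ex_derive. unfold gamma_integrand. auto_derive. lra. }
  rewrite RInt_lin_comb in Hparts by (apply ex_RInt_gamma_integrand; lra). lra.
Qed.

Lemma is_lim_seq_gamma_boundary_oo x :
  is_lim_seq (fun n => exp (x * ln (INR n + 1) - (INR n + 1))) 0.
Proof.
  destruct (gamma_exponent_le_linear (x + 1)) as [C HC].
  apply is_lim_seq_squeeze_0 with (b := fun n => exp C * / (1 + / 2 * (INR n + 1))).
  - intros n. generalize (pos_INR n); intro. split; [left; apply exp_pos|].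
    specialize (HC (INR n + 1) ltac:(lra)). replace (x + 1 - 1) with x in HC by ring.
    apply Rle_trans with (exp (C - (INR n + 1) / 2)).
    { destruct HC as [HC | ->]; [left; apply exp_increasing; auto | lra]. }
    unfold Rminus. rewrite exp_plus. apply Rmult_le_compat_l; [left; apply exp_pos|].
    rewrite exp_Ropp. apply Rinv_le_contravar; [lra|].
    replace ((INR n + 1) / 2) with (/ 2 * (INR n + 1)) by field. apply exp_ineq1_le.
  - replace 0 with (exp C * 0) by ring. apply (is_lim_seq_scal_l _ (exp C) 0).
    apply is_lim_seq_inv_one_plus; [lra | apply is_lim_seq_INR_succ].
Qed.

Lemma is_lim_seq_gamma_boundary_0 x : 0 < x ->
  is_lim_seq (fun n => exp (x * ln (/ (INR n + 1)) - / (INR n + 1))) 0.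
Proof.
  intros Hx.
  apply is_lim_seq_squeeze_0 with (b := fun n => / (1 + x * ln (INR n + 1))).
  - intros n. generalize (pos_INR n); intro. split; [left; apply exp_pos|].
    rewrite ln_Rinv by lra.
    assert (0 <= ln (INR n + 1)) by (rewrite <- ln_1; apply ln_le; lra).
    assert (0 < / (INR n + 1)) by (apply Rinv_0_lt_compat; lra).
    apply Rle_trans with (exp (- (x * ln (INR n + 1)))); [left; apply exp_increasing; lra|].
    rewrite exp_Ropp. apply Rinv_le_contravar; [nra | apply exp_ineq1_le].
  - apply is_lim_seq_inv_one_plus; auto.
    apply (is_lim_comp_seq ln (fun n => INR n + 1) p_infty p_infty);
      [apply is_lim_ln_p | exists O; intros; discriminate | apply is_lim_seq_INR_succ].
Qed.

Lemma Gamma_succ x : 0 < x -> Gamma (x + 1) = x * Gamma x.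
Proof.
  intros Hx.
  assert (H : is_lim_seq (Gamma_trunc (x + 1)) (x * Gamma x + 0 - 0)).
  { eapply is_lim_seq_ext; [intros n; symmetry; apply Gamma_trunc_succ; auto|].
    apply is_lim_seq_minus'; [apply is_lim_seq_plus'|].
    - apply (is_lim_seq_scal_l _ x (Gamma x)). apply is_lim_seq_Gamma_trunc; auto.
    - apply is_lim_seq_gamma_boundary_0; auto.
    - apply is_lim_seq_gamma_boundary_oo. }
  assert (E := is_lim_seq_unique _ _ (is_lim_seq_Gamma_trunc (x + 1) ltac:(lra))).
  rewrite (is_lim_seq_unique _ _ H) in E. injection E. lra.
Qed.

Definition ln_Gamma (x : R) : R := ln (Gamma x).

Lemma ln_Gamma_succ x : 0 < x -> ln_Gamma (x + 1) = ln_Gamma x + ln x.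
Proof.
  intros Hx. unfold ln_Gamma. rewrite Gamma_succ, ln_mult by (auto; apply Gamma_pos; auto). ring.
Qed.

Lemma ln_Gamma_shift x N : 0 < x ->
  ln_Gamma x = ln_Gamma (x + INR N) - partial_sum (fun j => ln (x + INR j)) N.
Proof.
  intros Hx. induction N; [simpl; rewrite Rplus_0_r; ring|].
  rewrite S_INR. cbn [partial_sum]. replace (x + (INR N + 1)) with ((x + INR N) + 1) by ring.
  rewrite ln_Gamma_succ by (generalize (pos_INR N); lra). lra.
Qed.

(** Pointwise weighted AM-GM; integrated, it is Hölder's inequality for [Gamma]. *)
Lemma gamma_integrand_convex x y lam t : 0 < t -> 0 <= lam <= 1 ->
  gamma_integrand (lam * x + (1 - lam) * y) t <=
  exp (lam * ln_Gamma x + (1 - lam) * ln_Gamma y) *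
    (lam * exp (- ln_Gamma x) * gamma_integrand x t
     + (1 - lam) * exp (- ln_Gamma y) * gamma_integrand y t).
Proof.
  intros Ht Hl. unfold gamma_integrand.
  set (a := ln_Gamma x). set (b := ln_Gamma y).
  replace ((lam * x + (1 - lam) * y - 1) * ln t - t) with ((lam * a + (1 - lam) * b) +
     (lam * (- a + ((x - 1) * ln t - t)) + (1 - lam) * (- b + ((y - 1) * ln t - t)))) by ring.
  rewrite exp_plus. apply Rmult_le_compat_l; [left; apply exp_pos|].
  eapply Rle_trans; [apply exp_convex; auto|]. rewrite !exp_plus. right; ring.
Qed.

Lemma ln_Gamma_convex x y lam : 0 < x -> 0 < y -> 0 <= lam <= 1 ->
  ln_Gamma (lam * x + (1 - lam) * y) <= lam * ln_Gamma x + (1 - lam) * ln_Gamma y.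
Proof.
  intros Hx Hy Hl. set (z := lam * x + (1 - lam) * y).
  assert (Hz : 0 < z).
  { unfold z. destruct (Rle_lt_or_eq_dec 0 lam (proj1 Hl)); [nra | subst; lra]. }
  set (E := exp (lam * ln_Gamma x + (1 - lam) * ln_Gamma y)).
  set (p := lam * exp (- ln_Gamma x)). set (q := (1 - lam) * exp (- ln_Gamma y)).
  assert (Htrunc : forall n, Gamma_trunc z n <= E * (p * Gamma_trunc x n + q * Gamma_trunc y n)).
  { intros n. unfold Gamma_trunc. generalize (pos_INR n); intro.
    assert (Hu : 0 < / (INR n + 1) <= 1)
      by (split; [apply Rinv_0_lt_compat | rewrite <- Rinv_1; apply Rinv_le_contravar]; lra).
    assert (Hex : forall w, ex_RInt (gamma_integrand w) (/ (INR n + 1)) (INR n + 1))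
      by (intros; apply ex_RInt_gamma_integrand; lra).
    rewrite <- RInt_lin_comb, <- (RInt_scal (V := R_CompleteNormedModule))
      by (auto; apply (ex_RInt_plus (V := R_CompleteNormedModule));
          apply (ex_RInt_scal (V := R_CompleteNormedModule)); auto).
    apply RInt_le; [lra | auto | |].
    - apply (ex_RInt_scal (V := R_CompleteNormedModule)).
      apply (ex_RInt_plus (V := R_CompleteNormedModule));
        apply (ex_RInt_scal (V := R_CompleteNormedModule)); auto.
    - intros t Ht. apply gamma_integrand_convex; [lra | auto]. }
  assert (Hlim : is_lim_seq (fun n => E * (p * Gamma_trunc x n + q * Gamma_trunc y n))
                   (E * (p * Gamma x + q * Gamma y))).
  { apply (is_lim_seq_scal_l _ E (p * Gamma x + q * Gamma y)).
    apply is_lim_seq_plus';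
      [exact (is_lim_seq_scal_l _ p _ (is_lim_seq_Gamma_trunc x Hx))
      | exact (is_lim_seq_scal_l _ q _ (is_lim_seq_Gamma_trunc y Hy))]. }
  assert (Hle := is_lim_seq_le _ _ _ _ Htrunc (is_lim_seq_Gamma_trunc z Hz) Hlim). simpl in Hle.
  assert (Hnorm : forall w, 0 < w -> exp (- ln_Gamma w) * Gamma w = 1).
  { intros w Hw. unfold ln_Gamma. rewrite exp_Ropp, exp_ln by (apply Gamma_pos; auto).
    field. apply Rgt_not_eq, Gamma_pos; auto. }
  replace (E * (p * Gamma x + q * Gamma y)) with E in Hle
    by (unfold p, q; rewrite !Rmult_assoc, Hnorm, Hnorm by auto; ring).
  unfold ln_Gamma at 1. rewrite <- (ln_exp (lam * ln_Gamma x + (1 - lam) * ln_Gamma y)).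
  apply ln_le; [apply Gamma_pos; auto | auto].
Qed.

Lemma ln_Gamma_chord_slope_le s t u : 0 < s -> s < t -> t < u ->
  (ln_Gamma t - ln_Gamma s) * (u - t) <= (ln_Gamma u - ln_Gamma t) * (t - s).
Proof.
  intros Hs Hst Htu. set (lam := (u - t) / (u - s)).
  assert (Hl : 0 <= lam <= 1).
  { unfold lam. split; [apply Rdiv_le_0_compat; lra|].
    apply Rmult_le_reg_r with (u - s); [lra|]. unfold Rdiv.
    rewrite Rmult_assoc, Rinv_l by lra. lra. }
  assert (H := ln_Gamma_convex s u lam Hs ltac:(lra) Hl).
  replace (lam * s + (1 - lam) * u) with t in H by (unfold lam; field; lra).
  apply Rmult_le_compat_l with (r := u - s) in H; [|lra].
  replace ((u - s) * (lam * ln_Gamma s + (1 - lam) * ln_Gamma u))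
    with ((u - t) * ln_Gamma s + (t - s) * ln_Gamma u) in H by (unfold lam; field; lra).
  nra.
Qed.

(** Wendel's bounds: compare the slope over [[y, y+c]] with those over [[y-1, y]] and
    [[y+c, y+c+1]], which equal [ln (y-1)] and [ln (y+c)]. *)
Lemma ln_Gamma_increment_bounds y c : 1 < y -> 0 < c ->
  c * ln (y - 1) <= ln_Gamma (y + c) - ln_Gamma y <= c * ln (y + c).
Proof.
  intros Hy Hc. split.
  - assert (H := ln_Gamma_chord_slope_le (y - 1) y (y + c) ltac:(lra) ltac:(lra) ltac:(lra)).
    assert (E := ln_Gamma_succ (y - 1) ltac:(lra)). replace (y - 1 + 1) with y in E by ring.
    replace (y - (y - 1)) with 1 in H by ring. replace (y + c - y) with c in H by ring.
    rewrite E in H. lra.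
  - assert (H := ln_Gamma_chord_slope_le y (y + c) (y + c + 1) ltac:(lra) ltac:(lra) ltac:(lra)).
    assert (E := ln_Gamma_succ (y + c) ltac:(lra)).
    replace (y + c + 1 - (y + c)) with 1 in H by ring. replace (y + c - y) with c in H by ring.
    rewrite E in H. lra.
Qed.

Lemma ln_Gamma_increment_approx y c : 1 < y -> 0 < c ->
  Rabs (ln_Gamma (y + c) - ln_Gamma y - c * ln y) <= (c * c + c) / (y - 1).
Proof.
  intros Hy Hc. destruct (ln_Gamma_increment_bounds y c Hy Hc) as [Hlo Hhi].
  assert (Hcy : 0 < c / y) by (apply Rdiv_lt_0_compat; lra).
  assert (Hy1 : 0 < 1 / (y - 1)) by (apply Rdiv_lt_0_compat; lra).
  assert (E1 : ln (y + c) = ln y + ln (1 + c / y))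
    by (rewrite <- ln_mult by lra; f_equal; field; lra).
  assert (E2 : ln y = ln (y - 1) + ln (1 + 1 / (y - 1)))
    by (rewrite <- ln_mult by lra; f_equal; field; lra).
  assert (B1 : c * ln (1 + c / y) <= c * (c / (y - 1))).
  { apply Rmult_le_compat_l; [lra|]. eapply Rle_trans; [apply ln1p_le; lra|].
    apply Rmult_le_compat_l; [lra | apply Rinv_le_contravar; lra]. }
  assert (B2 : c * ln (1 + 1 / (y - 1)) <= c * (1 / (y - 1)))
    by (apply Rmult_le_compat_l; [lra | apply ln1p_le; lra]).
  assert (0 <= c * ln (1 + c / y)) by (apply Rmult_le_pos; [lra | apply ln1p_nonneg; lra]).
  assert (0 <= c * ln (1 + 1 / (y - 1))) by (apply Rmult_le_pos; [lra | apply ln1p_nonneg; lra]).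
  replace ((c * c + c) / (y - 1)) with (c * (c / (y - 1)) + c * (1 / (y - 1))) by (field; lra).
  apply Rabs_le. rewrite E1 in Hhi. rewrite E2 in Hhi |- *. lra.
Qed.

Definition gauss_ln_Gamma (n : nat) (x : R) : R :=
  ln_Gamma (INR n + 2) + x * ln (INR n + 2) - partial_sum (fun j => ln (x + INR j)) (n + 2).

Lemma is_lim_seq_gauss_ln_Gamma x : 0 < x -> is_lim_seq (fun n => gauss_ln_Gamma n x) (ln_Gamma x).
Proof.
  intros Hx. apply is_lim_seq_of_dist_le with (K := x * x + x). intros n.
  generalize (pos_INR n); intro. set (N := INR n + 2).
  unfold gauss_ln_Gamma. fold N. rewrite (ln_Gamma_shift x (n + 2)) by auto.
  replace (INR (n + 2)) with N by (unfold N; rewrite plus_INR; simpl; ring).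
  replace (ln_Gamma N + x * ln N - partial_sum (fun j => ln (x + INR j)) (n + 2)
           - (ln_Gamma (x + N) - partial_sum (fun j => ln (x + INR j)) (n + 2)))
    with (- (ln_Gamma (N + x) - ln_Gamma N - x * ln N)) by (rewrite (Rplus_comm x N); ring).
  rewrite Rabs_Ropp. replace (INR n + 1) with (N - 1) by (unfold N; ring).
  apply ln_Gamma_increment_approx; unfold N; lra.
Qed.

Definition neg_ln_deriv (m : nat) (t : R) : R :=
  match m with O => - ln t | S k => (-1) ^ S k * INR (fact k) * / t ^ S k end.

Lemma is_derive_neg_ln_deriv m t : 0 < t -> is_derive (neg_ln_deriv m) t (neg_ln_deriv (S m) t).
Proof.
  intros Ht. destruct m as [|k]; unfold neg_ln_deriv.
  - auto_derive; [lra|]. simpl. field. lra.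
  - assert (t ^ k <> 0) by (apply pow_nonzero; lra).
    auto_derive; [change (t * t ^ k) with (t ^ S k); apply pow_nonzero; lra|].
    change (match k with | 0%nat => 1 | S _ => INR k + 1 end) with (INR (S k)).
    rewrite fact_simpl, mult_INR. simpl pow. field. split; lra.
Qed.

Lemma neg_ln_deriv_succ_abs_le m t s : 0 < s -> s <= t ->
  Rabs (neg_ln_deriv (S m) t) <= INR (fact m) / s ^ S m.
Proof.
  intros Hs Hst. unfold neg_ln_deriv. rewrite !Rabs_mult, pow_1_abs, Rmult_1_l.
  rewrite Rabs_right by (apply Rle_ge, pos_INR).
  rewrite Rabs_right by (left; apply Rinv_0_lt_compat, pow_lt; lra).
  apply Rmult_le_compat_l; [apply pos_INR|].
  apply Rinv_le_contravar; [apply pow_lt; lra | apply pow_incr; lra].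
Qed.

Lemma partial_sum_inv_sq_le z N : 0 < z ->
  partial_sum (fun j => / (z + INR j) ^ 2) (S N) <= / z ^ 2 + / z - / (z + INR N).
Proof.
  intros Hz. induction N; [simpl; rewrite Rplus_0_r; lra|].
  cbn [partial_sum] in *. rewrite S_INR. generalize (pos_INR N); intro.
  assert (/ (z + (INR N + 1)) ^ 2 <= / (z + INR N) - / (z + (INR N + 1))).
  { replace (/ (z + INR N) - / (z + (INR N + 1)))
      with (/ ((z + INR N) * (z + INR N + 1))) by (field; lra).
    apply Rinv_le_contravar; simpl; nra. }
  lra.
Qed.

Lemma neg_ln_deriv_taylor_le m x y j : 0 < x -> Rabs (y - x) < x / 2 ->
  Rabs (neg_ln_deriv m (y + INR j) - neg_ln_deriv m (x + INR j)
        - (y - x) * neg_ln_deriv (S m) (x + INR j))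
  <= INR (fact (S m)) * / (x / 2) ^ m * / (x / 2 + INR j) ^ 2 * (y - x) ^ 2.
Proof.
  intros Hx Hy. apply Rabs_lt_between in Hy. generalize (pos_INR j); intro.
  set (z := x / 2). assert (Hz : 0 < z) by (unfold z; lra).
  replace (y - x) with (y + INR j - (x + INR j)) by ring.
  eapply Rle_trans.
  { apply (taylor2_error_le (neg_ln_deriv m) (neg_ln_deriv (S m)) (neg_ln_deriv (S (S m)))
             (z + INR j) (2 * x + INR j)); try (unfold z; lra).
    - intros t Ht. apply is_derive_neg_ln_deriv. lra.
    - intros t Ht. apply is_derive_neg_ln_deriv. lra.
    - intros t Ht. apply (neg_ln_deriv_succ_abs_le (S m) t (z + INR j)); lra. }
  apply Rmult_le_compat_r; [apply pow2_ge_0|].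
  unfold Rdiv. rewrite !Rmult_assoc. apply Rmult_le_compat_l; [apply pos_INR|].
  rewrite <- Rinv_mult.
  apply Rinv_le_contravar; [apply Rmult_lt_0_compat; apply pow_lt; lra|].
  replace (S (S m)) with (m + 2)%nat by lia. rewrite pow_add.
  apply Rmult_le_compat_r; [apply pow2_ge_0 | apply pow_incr; lra].
Qed.

(** [gauss_approx m n] is the [m]-th derivative of [gauss_ln_Gamma n]; [gauss_poly_part]
    collects the terms that are polynomial in [x]. *)
Definition gauss_poly_part (m n : nat) (x : R) : R :=
  match m with
  | O => ln_Gamma (INR n + 2) + x * ln (INR n + 2)
  | S O => ln (INR n + 2)
  | _ => 0
  end.

Definition gauss_approx (m n : nat) (x : R) : R :=
  gauss_poly_part m n x + partial_sum (fun j => neg_ln_deriv m (x + INR j)) (n + 2).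

Lemma gauss_approx_0 n x : gauss_approx 0 n x = gauss_ln_Gamma n x.
Proof.
  unfold gauss_approx, gauss_ln_Gamma, gauss_poly_part, neg_ln_deriv.
  replace (partial_sum (fun j => - ln (x + INR j)) (n + 2))
    with (-1 * partial_sum (fun j => ln (x + INR j)) (n + 2)); [ring|].
  rewrite <- partial_sum_scal. apply partial_sum_ext. intros; ring.
Qed.

Lemma gauss_approx_taylor_le m n x y : 0 < x -> Rabs (y - x) < x / 2 ->
  Rabs (gauss_approx m n y - gauss_approx m n x - (y - x) * gauss_approx (S m) n x)
  <= (INR (fact (S m)) * / (x / 2) ^ m * (/ (x / 2) ^ 2 + / (x / 2))) * (y - x) ^ 2.
Proof.
  intros Hx Hy.
  set (C := INR (fact (S m)) * / (x / 2) ^ m).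
  assert (HC : 0 <= C)
    by (apply Rmult_le_pos; [apply pos_INR | left; apply Rinv_0_lt_compat, pow_lt; lra]).
  assert (E : gauss_approx m n y - gauss_approx m n x - (y - x) * gauss_approx (S m) n x =
     partial_sum (fun j => neg_ln_deriv m (y + INR j) - neg_ln_deriv m (x + INR j)
                           - (y - x) * neg_ln_deriv (S m) (x + INR j)) (n + 2)).
  { unfold gauss_approx. rewrite !partial_sum_minus, partial_sum_scal.
    destruct m as [|[|m]]; simpl; ring. }
  rewrite E. eapply Rle_trans; [apply partial_sum_abs_le|].
  eapply Rle_trans; [apply partial_sum_le; intros j _; apply neg_ln_deriv_taylor_le; auto|].
  fold C. replace (partial_sum (fun j => C * / (x / 2 + INR j) ^ 2 * (y - x) ^ 2) (n + 2))
    with (C * (y - x) ^ 2 * partial_sum (fun j => / (x / 2 + INR j) ^ 2) (n + 2))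
    by (rewrite <- partial_sum_scal; apply partial_sum_ext; intros; ring).
  replace (n + 2)%nat with (S (n + 1)) by lia.
  assert (H1 := partial_sum_inv_sq_le (x / 2) (n + 1) ltac:(lra)).
  assert (0 < / (x / 2 + INR (n + 1)))
    by (apply Rinv_0_lt_compat; generalize (pos_INR (n + 1)); lra).
  assert (0 <= C * (y - x) ^ 2) by (apply Rmult_le_pos; auto; apply pow2_ge_0).
  apply Rle_trans with (C * (y - x) ^ 2 * (/ (x / 2) ^ 2 + / (x / 2))); [|right; ring].
  apply Rmult_le_compat_l; auto. lra.
Qed.

(** [Lim_seq] is total; [gauss_limit] is only meaningful for [x > 0]. *)
Definition gauss_limit (m : nat) (x : R) : R := real (Lim_seq (fun n => gauss_approx m n x)).

Lemma gauss_limit_eq m x (l : R) : is_lim_seq (fun n => gauss_approx m n x) l -> gauss_limit m x = l.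
Proof. intros H. unfold gauss_limit. rewrite (is_lim_seq_unique _ _ H). reflexivity. Qed.

Lemma gauss_limit_0 x : 0 < x -> gauss_limit 0 x = ln_Gamma x.
Proof.
  intros Hx. apply gauss_limit_eq.
  eapply is_lim_seq_ext; [intros n; symmetry; apply gauss_approx_0 | apply is_lim_seq_gauss_ln_Gamma; auto].
Qed.

Lemma gauss_limit_step m x : 0 < x ->
  (forall y, 0 < y -> is_lim_seq (fun n => gauss_approx m n y) (gauss_limit m y)) ->
  is_lim_seq (fun n => gauss_approx (S m) n x) (gauss_limit (S m) x) /\
  is_derive (gauss_limit m) x (gauss_limit (S m) x).
Proof.
  intros Hx Hlim.
  destruct (is_derive_lim_of_quadratic_error (gauss_approx m) (gauss_approx (S m)) (gauss_limit m)
              x (x / 2) (INR (fact (S m)) * / (x / 2) ^ m * (/ (x / 2) ^ 2 + / (x / 2))))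
    as [D [HD Hder]].
  - lra.
  - apply Rmult_le_pos; [apply Rmult_le_pos; [apply pos_INR|] | apply Rplus_le_le_0_compat];
      left; apply Rinv_0_lt_compat; try apply pow_lt; lra.
  - intros y Hy. apply Hlim. apply Rabs_lt_between in Hy. lra.
  - intros n y Hy. apply gauss_approx_taylor_le; auto.
  - rewrite (gauss_limit_eq _ _ _ HD). auto.
Qed.

Lemma is_lim_seq_gauss_approx m x : 0 < x ->
  is_lim_seq (fun n => gauss_approx m n x) (gauss_limit m x).
Proof.
  revert x. induction m as [|m IHm]; intros x Hx.
  - rewrite gauss_limit_0 by auto.
    eapply is_lim_seq_ext; [intros n; symmetry; apply gauss_approx_0 | apply is_lim_seq_gauss_ln_Gamma; auto].
  - exact (proj1 (gauss_limit_step m x Hx IHm)).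
Qed.

Lemma is_derive_gauss_limit m x : 0 < x -> is_derive (gauss_limit m) x (gauss_limit (S m) x).
Proof. intros Hx. exact (proj2 (gauss_limit_step m x Hx (fun y => is_lim_seq_gauss_approx m y))). Qed.

Lemma digamma_eq_gauss_limit x : 0 < x -> digamma x = gauss_limit 1 x.
Proof.
  intros Hx. unfold digamma.
  assert (Hexp : forall t, 0 < t -> Gamma t = exp (gauss_limit 0 t)).
  { intros t Ht. rewrite gauss_limit_0 by auto. unfold ln_Gamma. rewrite exp_ln; auto. apply Gamma_pos; auto. }
  assert (Hder : is_derive (fun t => exp (gauss_limit 0 t)) x (gauss_limit 1 x * exp (gauss_limit 0 x))).
  { apply (is_derive_comp exp (gauss_limit 0) x (exp (gauss_limit 0 x)) (gauss_limit 1 x)).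
    - apply is_derive_Reals, derivable_pt_lim_exp.
    - apply is_derive_gauss_limit; auto. }
  replace (Derive Gamma x) with (gauss_limit 1 x * Gamma x).
  { field. apply Rgt_not_eq, Gamma_pos; auto. }
  rewrite (Derive_ext_loc Gamma (fun t => exp (gauss_limit 0 t))) by (apply locally_of_pos; auto).
  rewrite Hexp by auto. symmetry. apply is_derive_unique. exact Hder.
Qed.

Lemma polygamma_eq_gauss_limit m x : 0 < x -> polygamma m x = gauss_limit (S m) x.
Proof.
  unfold polygamma. revert x. induction m as [|m IHm]; intros x Hx; simpl.
  - apply digamma_eq_gauss_limit; auto.
  - rewrite (Derive_ext_loc _ (gauss_limit (S m))) by (apply locally_of_pos; auto).
    apply is_derive_unique, is_derive_gauss_limit; auto.
Qed.

Definition four_point (f : R -> R) (c s x : R) : R :=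
  (1 - s) * f x - (1 + s) * f (x + c) + (1 + s) * f (x + 1) - (1 - s) * f (x + 1 + c).

Lemma four_point_linear (f : R -> R) c s s' x :
  four_point f c s x = four_point f c s' x
    - (s - s') * (f x + f (x + c) - f (x + 1) - f (x + 1 + c)).
Proof. unfold four_point. ring. Qed.

Lemma four_point_1 (f : R -> R) c x : four_point f c 1 x = 2 * (f (x + 1) - f (x + c)).
Proof. unfold four_point. ring. Qed.

Section FourPointConvexity.
Variables (f f1 f2 : R -> R).
Hypothesis Hf1 : forall t, 0 < t -> is_derive f t (f1 t).
Hypothesis Hf2 : forall t, 0 < t -> is_derive f1 t (f2 t).
Hypothesis Hf2_decr : forall s t, 0 < s -> s < t -> f2 t < f2 s.

(** [g s = f (y - s) - f (y + s)] is convex on [[0, y)] with [g 0 = 0], so [g s / s] increases. *)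
Lemma odd_part_slope_lt y q p : 0 < q -> q < p -> p < y ->
  p * (f (y - q) - f (y + q)) < q * (f (y - p) - f (y + p)).
Proof.
  intros Hq Hqp Hpy.
  set (g := fun s => f (y - s) - f (y + s)).
  set (g1 := fun s => - f1 (y - s) - f1 (y + s)).
  set (g2 := fun s => f2 (y - s) - f2 (y + s)).
  assert (Hg1 : forall s, 0 <= s <= p -> derivable_pt_lim g s (g1 s)).
  { intros s Hs. apply is_derive_Reals. unfold g, g1.
    replace (- f1 (y - s) - f1 (y + s)) with ((-1) * f1 (y - s) - 1 * f1 (y + s)) by ring.
    apply (is_derive_minus (fun s => f (y - s)) (fun s => f (y + s))).
    - apply (is_derive_comp f (fun s => y - s)); [apply Hf1; lra | auto_derive; auto; ring].
    - apply (is_derive_comp f (fun s => y + s)); [apply Hf1; lra | auto_derive; auto; ring]. }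
  assert (Hg2 : forall s, 0 <= s <= p -> derivable_pt_lim g1 s (g2 s)).
  { intros s Hs. apply is_derive_Reals. unfold g1, g2.
    replace (f2 (y - s) - f2 (y + s)) with (- ((-1) * f2 (y - s)) - 1 * f2 (y + s)) by ring.
    apply (is_derive_minus (fun s => - f1 (y - s)) (fun s => f1 (y + s))).
    - apply (is_derive_opp (fun s => f1 (y - s))).
      apply (is_derive_comp f1 (fun s => y - s)); [apply Hf2; lra | auto_derive; auto; ring].
    - apply (is_derive_comp f1 (fun s => y + s)); [apply Hf2; lra | auto_derive; auto; ring]. }
  destruct (MVT_cor2 g g1 0 q Hq) as [x1 [E1 H1]]; [intros s Hs; apply Hg1; lra|].
  destruct (MVT_cor2 g g1 q p Hqp) as [x2 [E2 H2]]; [intros s Hs; apply Hg1; lra|].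
  destruct (MVT_cor2 g1 g2 x1 x2 ltac:(lra)) as [x3 [E3 H3]]; [intros s Hs; apply Hg2; lra|].
  assert (Hg0 : g 0 = 0) by (unfold g; rewrite Rminus_0_r, Rplus_0_r; ring).
  assert (Hg2p : 0 < g2 x3) by (unfold g2; apply Rlt_0_minus, Hf2_decr; lra).
  assert (Hslope : g1 x1 < g1 x2).
  { assert (0 < g2 x3 * (x2 - x1)) by (apply Rmult_lt_0_compat; lra). lra. }
  change (p * g q < q * g p).
  rewrite Hg0, Rminus_0_r in E1.
  replace (g p) with (g q + g1 x2 * (p - q)) by lra. rewrite E1.
  assert (0 < q * (p - q) * (g1 x2 - g1 x1)) by (apply Rmult_lt_0_compat; [apply Rmult_lt_0_compat|]; lra).
  nra.
Qed.

Lemma four_point_pos c x : 0 < x -> 0 < c < 1 -> 0 < four_point f c c x.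
Proof.
  intros Hx Hc. set (y := x + (1 + c) / 2).
  assert (H := odd_part_slope_lt y ((1 - c) / 2) ((1 + c) / 2) ltac:(lra) ltac:(lra) ltac:(unfold y; lra)).
  unfold four_point.
  replace (y - (1 - c) / 2) with (x + c) in H by (unfold y; field).
  replace (y + (1 - c) / 2) with (x + 1) in H by (unfold y; field).
  replace (y - (1 + c) / 2) with x in H by (unfold y; field).
  replace (y + (1 + c) / 2) with (x + 1 + c) in H by (unfold y; field).
  lra.
Qed.

Lemma four_point_neg c x : 0 < x -> 1 < c -> four_point f c c x < 0.
Proof.
  intros Hx Hc. set (y := x + (1 + c) / 2).
  assert (H := odd_part_slope_lt y ((c - 1) / 2) ((1 + c) / 2) ltac:(lra) ltac:(lra) ltac:(unfold y; lra)).
  unfold four_point.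
  replace (y - (c - 1) / 2) with (x + 1) in H by (unfold y; field).
  replace (y + (c - 1) / 2) with (x + c) in H by (unfold y; field).
  replace (y - (1 + c) / 2) with x in H by (unfold y; field).
  replace (y + (1 + c) / 2) with (x + 1 + c) in H by (unfold y; field).
  lra.
Qed.

End FourPointConvexity.

Definition inv_pow (m : nat) (t : R) : R := / t ^ S m.

Lemma inv_pow_pos m t : 0 < t -> 0 < inv_pow m t.
Proof. intros. apply Rinv_0_lt_compat, pow_lt; auto. Qed.

Lemma inv_pow_decr m s t : 0 < s -> s < t -> inv_pow m t < inv_pow m s.
Proof. intros. apply inv_pow_succ_lt_contravar. lra. Qed.

Lemma is_derive_inv_pow m t : 0 < t -> is_derive (inv_pow m) t (- INR (S m) / t ^ S (S m)).
Proof.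
  intros Ht. unfold inv_pow. assert (t ^ m <> 0) by (apply pow_nonzero; lra).
  auto_derive; [change (t * t ^ m) with (t ^ S m); apply pow_nonzero; lra|].
  change (match m with | 0%nat => 1 | S _ => INR m + 1 end) with (INR (S m)).
  simpl pow. field. split; lra.
Qed.

Lemma is_derive2_inv_pow m t : 0 < t ->
  is_derive (fun t => - INR (S m) / t ^ S (S m)) t (INR (S m) * INR (S (S m)) / t ^ S (S (S m))).
Proof.
  intros Ht. assert (t ^ m <> 0) by (apply pow_nonzero; lra).
  auto_derive; [change (t * (t * t ^ m)) with (t ^ S (S m)); apply pow_nonzero; lra|].
  change (match m with | 0%nat => 1 | S _ => INR m + 1 end) with (INR (S m)).
  rewrite !S_INR. simpl pow. field. split; lra.
Qed.

Lemma four_point_inv_pow_c_sign m c x : 0 < x -> 0 < c ->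
  (c < 1 -> 0 < four_point (inv_pow m) c c x) /\ (1 < c -> four_point (inv_pow m) c c x < 0).
Proof.
  intros Hx Hc.
  assert (Hdecr : forall s t, 0 < s -> s < t ->
    INR (S m) * INR (S (S m)) / t ^ S (S (S m)) < INR (S m) * INR (S (S m)) / s ^ S (S (S m))).
  { intros s t Hs Hst. unfold Rdiv. apply Rmult_lt_compat_l;
      [apply Rmult_lt_0_compat; apply lt_0_INR; lia | apply inv_pow_succ_lt_contravar; lra]. }
  split; intros H.
  - apply (four_point_pos _ _ _ (is_derive_inv_pow m) (is_derive2_inv_pow m) Hdecr); lra.
  - apply (four_point_neg _ _ _ (is_derive_inv_pow m) (is_derive2_inv_pow m) Hdecr); lra.
Qed.

(** With the signs at [s = c] and [s = 1], this fixes the sign for every [s] outside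
    [[min c 1, max c 1]]. *)
Lemma four_point_inv_pow_le m c s s' x : 0 < x -> 0 < c -> s' <= s ->
  four_point (inv_pow m) c s x <= four_point (inv_pow m) c s' x.
Proof.
  intros Hx Hc Hs. rewrite (four_point_linear _ c s s').
  assert (inv_pow m (x + 1) < inv_pow m x) by (apply inv_pow_decr; lra).
  assert (inv_pow m (x + 1 + c) < inv_pow m (x + c)) by (apply inv_pow_decr; lra).
  nra.
Qed.

Lemma four_point_inv_pow_1_sign m c x : 0 < x -> 0 < c ->
  (c < 1 -> four_point (inv_pow m) c 1 x < 0) /\ (1 < c -> 0 < four_point (inv_pow m) c 1 x).
Proof.
  intros Hx Hc. rewrite four_point_1. split; intros H.
  - assert (inv_pow m (x + 1) < inv_pow m (x + c)) by (apply inv_pow_decr; lra). lra.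
  - assert (inv_pow m (x + c) < inv_pow m (x + 1)) by (apply inv_pow_decr; lra). lra.
Qed.

Definition scaled_polygamma_diff (m : nat) (a b : R) : R :=
  (-1) ^ m * (polygamma m b - polygamma m a) / INR (fact m).

Lemma gauss_approx_succ_diff m n a b : 0 < a -> 0 < b ->
  (-1) ^ m / INR (fact m) * (gauss_approx (S m) n b - gauss_approx (S m) n a) =
  partial_sum (fun j => inv_pow m (a + INR j) - inv_pow m (b + INR j)) (n + 2).
Proof.
  intros Ha Hb. assert (Hf : 0 < INR (fact m)) by apply INR_fact_lt_0.
  assert (Hsign : (-1) ^ m * (-1) ^ m = 1).
  { rewrite <- pow_add. replace (m + m)%nat with (2 * m)%nat by lia.
    rewrite pow_mult. replace ((-1) ^ 2) with 1 by (simpl; ring). apply pow1. }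
  unfold gauss_approx.
  replace (gauss_poly_part (S m) n b) with (gauss_poly_part (S m) n a) by (destruct m; reflexivity).
  replace (gauss_poly_part (S m) n a + partial_sum (fun j => neg_ln_deriv (S m) (b + INR j)) (n + 2)
           - (gauss_poly_part (S m) n a + partial_sum (fun j => neg_ln_deriv (S m) (a + INR j)) (n + 2)))
    with (partial_sum (fun j => neg_ln_deriv (S m) (b + INR j) - neg_ln_deriv (S m) (a + INR j)) (n + 2))
    by (rewrite partial_sum_minus; ring).
  rewrite <- partial_sum_scal. apply partial_sum_ext. intros j _.
  unfold neg_ln_deriv, inv_pow. simpl pow. generalize (pos_INR j); intro.
  set (P := (-1) ^ m) in *.
  transitivity (P * P * (/ ((a + INR j) * (a + INR j) ^ m) - / ((b + INR j) * (b + INR j) ^ m)));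
    [field; repeat split; try apply pow_nonzero; lra | rewrite Hsign; ring].
Qed.

Lemma is_lim_seq_scaled_polygamma_diff m a b : 0 < a -> 0 < b ->
  is_lim_seq (partial_sum (fun j => inv_pow m (a + INR j) - inv_pow m (b + INR j)))
    (scaled_polygamma_diff m a b).
Proof.
  intros Ha Hb. apply (is_lim_seq_incr_n _ 2).
  eapply is_lim_seq_ext; [intros n; apply gauss_approx_succ_diff; auto|].
  unfold scaled_polygamma_diff. rewrite !polygamma_eq_gauss_limit by auto.
  replace ((-1) ^ m * (gauss_limit (S m) b - gauss_limit (S m) a) / INR (fact m))
    with ((-1) ^ m / INR (fact m) * (gauss_limit (S m) b - gauss_limit (S m) a))
    by (field; apply INR_fact_neq_0).
  apply (is_lim_seq_scal_l _ _ (gauss_limit (S m) b - gauss_limit (S m) a)).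
  apply is_lim_seq_minus'; apply is_lim_seq_gauss_approx; auto.
Qed.

Lemma scaled_polygamma_diff_ge m a c : 0 < a -> 0 < c ->
  inv_pow m a - inv_pow m (a + c) <= scaled_polygamma_diff m a (a + c).
Proof.
  intros Ha Hc.
  replace (inv_pow m a - inv_pow m (a + c))
    with (inv_pow m (a + INR 0) - inv_pow m (a + c + INR 0)) by (simpl; rewrite !Rplus_0_r; auto).
  apply first_term_le_series with (d := fun j => inv_pow m (a + INR j) - inv_pow m (a + c + INR j)).
  - intros j. generalize (pos_INR j); intro.
    assert (inv_pow m (a + c + INR j) < inv_pow m (a + INR j)) by (apply inv_pow_decr; lra). lra.
  - apply is_lim_seq_scaled_polygamma_diff; lra.
Qed.

Lemma digamma_diff_le a c : 0 < a -> 1 < c -> scaled_polygamma_diff 0 a (a + c) <= / a + c.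
Proof.
  intros Ha Hc.
  set (t := fun j => inv_pow 0 (a + INR j) - inv_pow 0 (a + c + INR j)).
  assert (Hinv : forall u, inv_pow 0 u = / u) by (intros; unfold inv_pow; simpl; rewrite Rmult_1_r; auto).
  assert (Hn : forall n, partial_sum t (S n) <= / a + c - c / (INR n + 1)).
  { induction n.
    - simpl. unfold t. simpl. rewrite !Rplus_0_r, !Hinv.
      assert (0 < / (a + c)) by (apply Rinv_0_lt_compat; lra). lra.
    - cbn [partial_sum] in *.
      replace (t (S n)) with (/ (a + (INR n + 1)) - / (a + c + (INR n + 1)))
        by (unfold t; rewrite !Hinv, S_INR; auto).
      rewrite S_INR.
      generalize (pos_INR n); intro.
      assert (/ (a + (INR n + 1)) - / (a + c + (INR n + 1)) <= c / (INR n + 1) - c / (INR n + 1 + 1)).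
      { replace (/ (a + (INR n + 1)) - / (a + c + (INR n + 1)))
          with (c / ((a + (INR n + 1)) * (a + c + (INR n + 1)))) by (field; lra).
        replace (c / (INR n + 1) - c / (INR n + 1 + 1))
          with (c / ((INR n + 1) * (INR n + 1 + 1))) by (field; lra).
        unfold Rdiv. apply Rmult_le_compat_l; [lra|]. apply Rinv_le_contravar; nra. }
      assert (0 < c / (INR n + 1 + 1)) by (apply Rdiv_lt_0_compat; lra).
      lra. }
  assert (Hl := is_lim_seq_scaled_polygamma_diff 0 a (a + c) Ha ltac:(lra)).
  apply is_lim_seq_incr_1 in Hl.
  assert (Hb : forall n, partial_sum t (S n) <= / a + c).
  { intros n. specialize (Hn n).
    assert (0 < c / (INR n + 1)) by (apply Rdiv_lt_0_compat; generalize (pos_INR n); lra). lra. }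
  exact (is_lim_seq_le _ _ _ _ Hb Hl (is_lim_seq_const _)).
Qed.

(** [gap m a c (c t)] is [2 c / m!] times the middle member of [double_ineq (S m) a (a + c)]
    minus its bound with parameter [t]. *)
Definition gap (m : nat) (a c s : R) : R :=
  2 * scaled_polygamma_diff m a (a + c) - (inv_pow m a - inv_pow m (a + c))
  - s * (inv_pow m a + inv_pow m (a + c)).

Lemma double_ineq_iff_gap m a c be ga : 0 < a -> 0 < c ->
  double_ineq (S m) a (a + c) be ga <-> 0 < gap m a c (c * be) /\ gap m a c (c * ga) < 0.
Proof.
  intros Ha Hc. unfold double_ineq, gap, scaled_polygamma_diff, inv_pow.
  replace (S m - 1)%nat with m by lia. replace (a + c - a) with c by ring.
  assert (Hf : 0 < INR (fact m)) by apply INR_fact_lt_0.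
  set (F := INR (fact m)) in *.
  set (P := (-1) ^ m * (polygamma m (a + c) - polygamma m a)).
  set (X := / a ^ S m). set (Y := / (a + c) ^ S m).
  assert (Hlow : forall t, P / c - F / 2 * ((1 / c + t) * X + (t - 1 / c) * Y)
               = F / (2 * c) * (2 * (P / F) - (X - Y) - c * t * (X + Y))) by (intros; field; lra).
  assert (HK : 0 < F / (2 * c)) by (apply Rdiv_lt_0_compat; lra).
  replace (P * / c) with (P / c) by reflexivity.
  split; intros [H1 H2]; split.
  - apply (Rmult_lt_reg_l (F / (2 * c))); [auto|]. rewrite <- Hlow. lra.
  - apply (Rmult_lt_reg_l (F / (2 * c))); [auto|]. rewrite <- Hlow. lra.
  - generalize (Hlow be) (Rmult_lt_0_compat _ _ HK H1). lra.
  - assert (0 < F / (2 * c) * - (2 * (P / F) - (X - Y) - c * ga * (X + Y)))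
      by (apply Rmult_lt_0_compat; lra).
    generalize (Hlow ga). lra.
Qed.

Lemma partial_sum_four_point (f : R -> R) a c s n :
  partial_sum (fun j => four_point f c s (a + INR j)) n =
  2 * partial_sum (fun j => f (a + INR j) - f (a + c + INR j)) n - (f a - f (a + c))
  + (f (a + INR n) - f (a + c + INR n))
  - s * (f a + f (a + c) - f (a + INR n) - f (a + c + INR n)).
Proof.
  induction n; [simpl; rewrite !Rplus_0_r; ring|].
  cbn [partial_sum]. rewrite IHn, S_INR. unfold four_point.
  replace (a + INR n + c) with (a + c + INR n) by ring.
  replace (a + INR n + 1 + c) with (a + c + (INR n + 1)) by ring.
  replace (a + INR n + 1) with (a + (INR n + 1)) by ring.
  ring.
Qed.

Lemma is_lim_seq_inv_pow_shift m a : 0 < a -> is_lim_seq (fun n => inv_pow m (a + INR n)) 0.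
Proof.
  intros Ha. assert (Ham : 0 < a ^ m) by (apply pow_lt; lra).
  apply is_lim_seq_squeeze_0 with (b := fun n => / a ^ S m * / (1 + / a * INR n)).
  - intros n. generalize (pos_INR n); intro. split; [left; apply inv_pow_pos; lra|].
    unfold inv_pow. rewrite <- Rinv_mult.
    apply Rinv_le_contravar; [apply Rmult_lt_0_compat; [apply pow_lt | apply Rplus_lt_le_0_compat]|].
    1-3: try (apply Rmult_le_pos; [left; apply Rinv_0_lt_compat|]); lra.
    replace (a ^ S m * (1 + / a * INR n)) with (a ^ m * (a + INR n)) by (simpl; field; lra).
    simpl. rewrite (Rmult_comm (a + INR n)). apply Rmult_le_compat_r; [lra | apply pow_incr; lra].
  - replace 0 with (/ a ^ S m * 0) by ring.
    apply (is_lim_seq_scal_l _ _ 0), is_lim_seq_inv_one_plus;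
      [apply Rinv_0_lt_compat; lra | apply is_lim_seq_INR].
Qed.

Lemma is_lim_seq_four_point_inv_pow m a c s : 0 < a -> 0 < c ->
  is_lim_seq (partial_sum (fun j => four_point (inv_pow m) c s (a + INR j))) (gap m a c s).
Proof.
  intros Ha Hc.
  eapply is_lim_seq_ext; [intros n; symmetry; apply partial_sum_four_point|].
  assert (H1 := is_lim_seq_scaled_polygamma_diff m a (a + c) Ha ltac:(lra)).
  assert (H2 := is_lim_seq_inv_pow_shift m a Ha).
  assert (H3 := is_lim_seq_inv_pow_shift m (a + c) ltac:(lra)).
  unfold gap.
  replace (2 * scaled_polygamma_diff m a (a + c) - (inv_pow m a - inv_pow m (a + c))
           - s * (inv_pow m a + inv_pow m (a + c)))
    with (2 * scaled_polygamma_diff m a (a + c) - (inv_pow m a - inv_pow m (a + c)) + (0 - 0)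
          - s * (inv_pow m a + inv_pow m (a + c) - 0 - 0)) by ring.
  apply is_lim_seq_minus'; [apply is_lim_seq_plus'; [apply is_lim_seq_minus'|]|].
  - exact (is_lim_seq_scal_l _ 2 _ H1).
  - apply is_lim_seq_const.
  - apply is_lim_seq_minus'; auto.
  - apply (is_lim_seq_scal_l _ s (inv_pow m a + inv_pow m (a + c) - 0 - 0)).
    apply is_lim_seq_minus'; [apply is_lim_seq_minus'; [apply is_lim_seq_const|]|]; auto.
Qed.

Lemma gap_pos m a c s : 0 < a -> 0 < c ->
  (forall x, 0 < x -> 0 < four_point (inv_pow m) c s x) -> 0 < gap m a c s.
Proof.
  intros Ha Hc Hpos. apply Rlt_le_trans with (four_point (inv_pow m) c s (a + INR 0));
    [apply Hpos; simpl; lra|].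
  apply (first_term_le_series (fun j => four_point (inv_pow m) c s (a + INR j)));
    [intros j; apply Hpos; generalize (pos_INR j); lra|].
  apply is_lim_seq_four_point_inv_pow; auto.
Qed.

Lemma gap_neg m a c s : 0 < a -> 0 < c ->
  (forall x, 0 < x -> four_point (inv_pow m) c s x < 0) -> gap m a c s < 0.
Proof.
  intros Ha Hc Hneg. apply Rle_lt_trans with (four_point (inv_pow m) c s (a + INR 0));
    [| apply Hneg; simpl; lra].
  apply (series_le_first_term (fun j => four_point (inv_pow m) c s (a + INR j)));
    [intros j; apply Hneg; generalize (pos_INR j); lra|].
  apply is_lim_seq_four_point_inv_pow; auto.
Qed.

Lemma four_point_inv_pow_0 c x : 0 < x -> 0 < c ->
  four_point (inv_pow 0) c c x = c * (1 - c ^ 2) / (x * (x + 1 + c) * (x + c) * (x + 1)).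
Proof. intros Hx Hc. unfold four_point, inv_pow. simpl. field. repeat split; lra. Qed.

Lemma four_point_inv_pow_0_abs_le c x a : 0 < a -> a <= x -> 0 < c ->
  Rabs (four_point (inv_pow 0) c c x) <= c * Rabs (1 - c ^ 2) / a ^ 2 * (/ x - / (x + 1)).
Proof.
  intros Ha Hax Hc. rewrite four_point_inv_pow_0 by lra.
  replace (/ x - / (x + 1)) with (/ (x * (x + 1))) by (field; lra).
  assert (Hd : 0 < x * (x + 1 + c) * (x + c) * (x + 1)) by (repeat apply Rmult_lt_0_compat; lra).
  rewrite Rabs_div, (Rabs_right (x * (x + 1 + c) * (x + c) * (x + 1))), Rabs_mult, (Rabs_right c) by lra.
  assert (HA : 0 <= c * Rabs (1 - c ^ 2)) by (apply Rmult_le_pos; [lra | apply Rabs_pos]).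
  unfold Rdiv. rewrite (Rmult_assoc (c * Rabs (1 - c ^ 2)) (/ a ^ 2)).
  apply Rmult_le_compat_l; auto.
  rewrite <- Rinv_mult.
  apply Rinv_le_contravar; [apply Rmult_lt_0_compat; [apply pow_lt | apply Rmult_lt_0_compat]; lra|].
  assert (a ^ 2 <= (x + 1 + c) * (x + c)) by (simpl; nra).
  assert (0 < x * (x + 1)) by nra.
  nra.
Qed.

Lemma gap_0_c_abs_le c a : 0 < a -> 0 < c -> Rabs (gap 0 a c c) <= c * Rabs (1 - c ^ 2) / a ^ 3.
Proof.
  intros Ha Hc. set (K := c * Rabs (1 - c ^ 2) / a ^ 2).
  assert (HK : 0 <= K).
  { apply Rdiv_le_0_compat; [apply Rmult_le_pos; [lra | apply Rabs_pos] | apply pow_lt; lra]. }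
  assert (Hb : forall n, Rabs (partial_sum (fun j => four_point (inv_pow 0) c c (a + INR j)) n) <= K / a).
  { intros n. eapply Rle_trans; [apply partial_sum_abs_le|].
    eapply Rle_trans.
    { apply partial_sum_le with (g := fun j => K * (/ (a + INR j) - / (a + INR (S j)))).
      intros j _. rewrite S_INR, <- Rplus_assoc.
      apply four_point_inv_pow_0_abs_le; auto. generalize (pos_INR j); lra. }
    rewrite partial_sum_scal, (partial_sum_telescope (fun j => / (a + INR j))), Rplus_0_r.
    assert (0 < / (a + INR n)) by (apply Rinv_0_lt_compat; generalize (pos_INR n); lra).
    unfold Rdiv. apply Rmult_le_compat_l; auto. simpl. lra. }
  assert (Hl := is_lim_seq_abs _ _ (is_lim_seq_four_point_inv_pow 0 a c c Ha Hc)).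
  replace (c * Rabs (1 - c ^ 2) / a ^ 3) with (K / a) by (unfold K; simpl; field; lra).
  exact (is_lim_seq_le _ _ _ _ Hb Hl (is_lim_seq_const _)).
Qed.

Lemma gap_linear m a c s s' :
  gap m a c s = gap m a c s' - (s - s') * (inv_pow m a + inv_pow m (a + c)).
Proof. unfold gap. ring. Qed.

(** [a = 1 + c |1 - c^2| / |s - c|] makes the linear term dominate the [O (a^-3)] one. *)
Lemma gap_0_sign_large_a c s : 0 < c -> s <> c ->
  exists a, 0 < a /\ (c < s -> gap 0 a c s < 0) /\ (s < c -> 0 < gap 0 a c s).
Proof.
  intros Hc Hs. set (K := c * Rabs (1 - c ^ 2)). set (d := Rabs (s - c)).
  assert (HK : 0 <= K) by (apply Rmult_le_pos; [lra | apply Rabs_pos]).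
  assert (Hd : 0 < d) by (apply Rabs_pos_lt; lra).
  set (a := 1 + K / d). assert (Ha : 1 <= a) by (generalize (Rdiv_le_0_compat K d HK Hd); unfold a; lra).
  exists a. assert (Hbound := gap_0_c_abs_le c a ltac:(lra) Hc). fold K in Hbound.
  apply Rabs_le_between in Hbound.
  assert (Hdom : K / a ^ 3 <= d * inv_pow 0 a).
  { assert (Hda : K <= d * a) by (unfold a; replace (d * (1 + K / d)) with (d + K) by (field; lra); lra).
    unfold inv_pow. simpl. rewrite Rmult_1_r.
    apply Rmult_le_reg_r with (a * (a * a)); [nra|].
    replace (K / (a * (a * a)) * (a * (a * a))) with K by (field; lra).
    replace (d * / a * (a * (a * a))) with (d * a * a) by (field; lra).
    assert (0 <= d * a * (a - 1)) by (apply Rmult_le_pos; [apply Rmult_le_pos|]; lra). lra. }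
  assert (Hpos := inv_pow_pos 0 (a + c) ltac:(lra)).
  rewrite (gap_linear 0 a c s c). split; [lra|]. split; intros Hsc.
  - unfold d in Hdom. rewrite Rabs_right in Hdom by lra. nra.
  - unfold d in Hdom. rewrite Rabs_left in Hdom by lra. nra.
Qed.

(** Small [a]: the gap at [s < 1] is at least [(1 - s)/a - (1 + s)/(a + c)]. *)
Lemma gap_0_nonneg_small_a c s : 0 < c -> s < 1 -> exists a, 0 < a /\ 0 <= gap 0 a c s.
Proof.
  intros Hc Hs. set (a := c * (1 - s) / (2 * (Rabs s + 1))).
  assert (Habs : 0 <= Rabs s) by apply Rabs_pos.
  assert (Ha : 0 < a) by (apply Rdiv_lt_0_compat; [apply Rmult_lt_0_compat|]; lra).
  exists a. split; auto.
  assert (HS := scaled_polygamma_diff_ge 0 a c Ha Hc).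
  assert (Hinv : forall u, inv_pow 0 u = / u) by (intros; unfold inv_pow; simpl; rewrite Rmult_1_r; auto).
  unfold gap. rewrite !Hinv in *.
  assert (Hkey : 2 * s * a <= c * (1 - s)).
  { replace (2 * s * a) with (c * (1 - s) * (s / (Rabs s + 1))) by (unfold a; field; lra).
    assert (s / (Rabs s + 1) <= 1).
    { apply Rmult_le_reg_r with (Rabs s + 1); [lra|]. unfold Rdiv.
      rewrite Rmult_assoc, Rinv_l by lra. generalize (RRle_abs s). lra. }
    assert (0 < c * (1 - s)) by (apply Rmult_lt_0_compat; lra). nra. }
  assert (0 <= (1 - s) * / a - (1 + s) * / (a + c)).
  { replace ((1 - s) * / a - (1 + s) * / (a + c))
      with (((1 - s) * c - 2 * s * a) * / (a * (a + c))) by (field; lra).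
    apply Rmult_le_pos; [lra | left; apply Rinv_0_lt_compat; nra]. }
  nra.
Qed.

Lemma gap_0_neg_small_a c s : 1 < c -> 1 < s -> exists a, 0 < a /\ gap 0 a c s < 0.
Proof.
  intros Hc Hs. set (a := (s - 1) / (2 * c)).
  assert (Ha : 0 < a) by (apply Rdiv_lt_0_compat; lra).
  exists a. split; auto.
  assert (HS := digamma_diff_le a c Ha Hc).
  assert (Hinv : forall u, inv_pow 0 u = / u) by (intros; unfold inv_pow; simpl; rewrite Rmult_1_r; auto).
  unfold gap. rewrite !Hinv.
  assert (0 < / (a + c)) by (apply Rinv_0_lt_compat; lra).
  assert ((1 - s) * / a + 2 * c = 0) by (unfold a; field; lra).
  nra.
Qed.

Lemma holds_all_iff_gap c be ga : 0 < c ->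
  holds_all c be ga <->
  (forall m a, 0 < a -> 0 < gap m a c (c * be) /\ gap m a c (c * ga) < 0).
Proof.
  intros Hc. split.
  - intros H m a Ha. apply double_ineq_iff_gap; auto. apply H; try lia; lra.
  - intros H k a b Hk Ha Hb Hba. destruct k as [|m]; [lia|].
    replace b with (a + c) by lra. apply double_ineq_iff_gap; auto.
Qed.

Lemma gap_signs_iff_small c sb sg : 0 < c < 1 ->
  (forall m a, 0 < a -> 0 < gap m a c sb /\ gap m a c sg < 0) <-> sb <= c /\ 1 <= sg.
Proof.
  intros Hc. split.
  - intros H. split.
    + destruct (Rle_or_lt sb c) as [|Hsb]; auto.
      destruct (gap_0_sign_large_a c sb ltac:(lra) ltac:(lra)) as [a [Ha [Hneg _]]].
      generalize (proj1 (H O a Ha)) (Hneg Hsb). lra.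
    + destruct (Rle_or_lt 1 sg) as [|Hsg]; auto.
      destruct (gap_0_nonneg_small_a c sg ltac:(lra) Hsg) as [a [Ha Hnonneg]].
      generalize (proj2 (H O a Ha)). lra.
  - intros [Hsb Hsg] m a Ha. split.
    + apply gap_pos; [auto | lra |]. intros x Hx.
      eapply Rlt_le_trans; [apply (proj1 (four_point_inv_pow_c_sign m c x Hx ltac:(lra))); lra|].
      apply four_point_inv_pow_le; lra.
    + apply gap_neg; [auto | lra |]. intros x Hx.
      eapply Rle_lt_trans; [apply (four_point_inv_pow_le m c sg 1); lra|].
      apply (proj1 (four_point_inv_pow_1_sign m c x Hx ltac:(lra))); lra.
Qed.

Lemma gap_signs_iff_large c sb sg : 1 < c ->
  (forall m a, 0 < a -> 0 < gap m a c sb /\ gap m a c sg < 0) <-> sb <= 1 /\ c <= sg.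
Proof.
  intros Hc. split.
  - intros H. split.
    + destruct (Rle_or_lt sb 1) as [|Hsb]; auto.
      destruct (gap_0_neg_small_a c sb Hc Hsb) as [a [Ha Hneg]].
      generalize (proj1 (H O a Ha)). lra.
    + destruct (Rle_or_lt c sg) as [|Hsg]; auto.
      destruct (gap_0_sign_large_a c sg ltac:(lra) ltac:(lra)) as [a [Ha [_ Hpos]]].
      generalize (proj2 (H O a Ha)) (Hpos Hsg). lra.
  - intros [Hsb Hsg] m a Ha. split.
    + apply gap_pos; [auto | lra |]. intros x Hx.
      eapply Rlt_le_trans; [apply (proj2 (four_point_inv_pow_1_sign m c x Hx ltac:(lra))); lra|].
      apply four_point_inv_pow_le; lra.
    + apply gap_neg; [auto | lra |]. intros x Hx.
      eapply Rle_lt_trans; [apply (four_point_inv_pow_le m c sg c); lra|].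
      apply (proj2 (four_point_inv_pow_c_sign m c x Hx ltac:(lra))); lra.
Qed.

Lemma double_ineq_swap k a b be ga : a <> b ->
  double_ineq k a b be ga -> double_ineq k b a be ga.
Proof.
  intros Hab. unfold double_ineq.
  set (F := INR (fact (k - 1))). set (X := / a ^ k). set (Y := / b ^ k).
  set (Pa := polygamma (k - 1) a). set (Pb := polygamma (k - 1) b).
  assert (E1 : forall t, F / 2 * ((1 / (b - a) + t) * X + (t - 1 / (b - a)) * Y)
                       = F / 2 * ((1 / (a - b) + t) * Y + (t - 1 / (a - b)) * X))
    by (intros t; field; split; lra).
  assert (E2 : (-1) ^ (k - 1) * (Pb - Pa) / (b - a) = (-1) ^ (k - 1) * (Pa - Pb) / (a - b))
    by (field; split; lra).
  rewrite !E1, E2. auto.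
Qed.

Lemma holds_all_opp c be ga : holds_all c be ga -> holds_all (- c) be ga.
Proof.
  intros H k a b Hk Ha Hb Hba. destruct (Req_dec a b) as [-> | Hab].
  - apply H; auto; lra.
  - apply double_ineq_swap; [lra | apply H; auto; lra].
Qed.

Lemma holds_all_abs c be ga : holds_all c be ga <-> holds_all (Rabs c) be ga.
Proof.
  unfold Rabs. destruct (Rcase_abs c); [| tauto].
  split; [apply holds_all_opp|]. intros H. rewrite <- (Ropp_involutive c). apply holds_all_opp, H.
Qed.

Definition ln_Gamma_defect (c y : R) : R :=
  ln_Gamma (y + c) - ln_Gamma y - c / 2 * (ln y + ln (y + c)) - / 2 * (ln y - ln (y + c)).

Lemma ln_Gamma_defect_step c x : 0 < x -> 0 < c ->
  ln_Gamma_defect c x - ln_Gamma_defect c (x + 1) = - / 2 * four_point (fun t => - ln t) c c x.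
Proof.
  intros Hx Hc. unfold ln_Gamma_defect, four_point.
  replace (x + 1 + c) with (x + c + 1) by ring.
  rewrite !ln_Gamma_succ by lra. field.
Qed.

Lemma ln_Gamma_defect_abs_le c y : 1 < y -> 0 < c ->
  Rabs (ln_Gamma_defect c y) <= (c * c + c + Rabs (1 - c) * c / 2) / (y - 1).
Proof.
  intros Hy Hc.
  assert (Hcy : 0 < c / y) by (apply Rdiv_lt_0_compat; lra).
  assert (E : ln_Gamma_defect c y
              = (ln_Gamma (y + c) - ln_Gamma y - c * ln y) + (1 - c) / 2 * ln (1 + c / y)).
  { unfold ln_Gamma_defect.
    replace (ln (y + c)) with (ln y + ln (1 + c / y)) by (rewrite <- ln_mult by lra; f_equal; field; lra).
    field. }
  assert (Hln : Rabs ((1 - c) / 2 * ln (1 + c / y)) <= Rabs (1 - c) * c / 2 / (y - 1)).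
  { rewrite Rabs_mult, Rabs_div, (Rabs_right 2), (Rabs_right (ln (1 + c / y))) by
      (try apply Rle_ge, ln1p_nonneg; lra).
    replace (Rabs (1 - c) * c / 2 / (y - 1)) with (Rabs (1 - c) / 2 * (c / (y - 1))) by (field; lra).
    apply Rmult_le_compat_l; [generalize (Rabs_pos (1 - c)); lra|].
    eapply Rle_trans; [apply ln1p_le; lra|].
    apply Rmult_le_compat_l; [lra | apply Rinv_le_contravar; lra]. }
  rewrite E. eapply Rle_trans; [apply Rabs_triang|].
  generalize (ln_Gamma_increment_approx y c Hy Hc). unfold Rdiv in *. lra.
Qed.

Lemma is_lim_seq_ln_Gamma_defect_series c a : 0 < a -> 0 < c ->
  is_lim_seq (partial_sum (fun j => - / 2 * four_point (fun t => - ln t) c c (a + INR j)))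
    (ln_Gamma_defect c a).
Proof.
  intros Ha Hc.
  apply is_lim_seq_ext
    with (u := fun n => ln_Gamma_defect c (a + INR 0) - ln_Gamma_defect c (a + INR n)).
  { intros n. rewrite <- (partial_sum_telescope (fun j => ln_Gamma_defect c (a + INR j))).
    apply partial_sum_ext. intros j _. rewrite S_INR, <- Rplus_assoc.
    apply ln_Gamma_defect_step; [generalize (pos_INR j) |]; lra. }
  replace (ln_Gamma_defect c a) with (ln_Gamma_defect c (a + INR 0) - 0) by (simpl; rewrite Rplus_0_r; ring).
  apply is_lim_seq_minus'; [apply is_lim_seq_const|].
  apply (is_lim_seq_incr_n _ 2), is_lim_seq_of_dist_le with (K := c * c + c + Rabs (1 - c) * c / 2).
  intros n. rewrite Rminus_0_r. generalize (pos_INR n); intro.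
  eapply Rle_trans; [apply ln_Gamma_defect_abs_le; [rewrite plus_INR; simpl; lra | lra]|].
  unfold Rdiv. apply Rmult_le_compat_l.
  - generalize (Rabs_pos (1 - c)); intro. assert (0 <= Rabs (1 - c) * c) by nra. nra.
  - rewrite plus_INR. apply Rinv_le_contravar; simpl; lra.
Qed.

Lemma four_point_neg_ln_sign c x : 0 < x -> 0 < c ->
  (c < 1 -> 0 < four_point (fun t => - ln t) c c x) /\ (1 < c -> four_point (fun t => - ln t) c c x < 0).
Proof.
  intros Hx Hc.
  assert (Hd1 : forall t, 0 < t -> is_derive (fun t => - ln t) t (- / t))
    by (intros t Ht; auto_derive; [lra | field; lra]).
  assert (Hd2 : forall t, 0 < t -> is_derive (fun t => - / t) t (/ t ^ 2))
    by (intros t Ht; auto_derive; [lra | field; lra]).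
  assert (Hdecr : forall s t, 0 < s -> s < t -> / t ^ 2 < / s ^ 2)
    by (intros s t Hs Hst; apply (inv_pow_succ_lt_contravar s t 1); lra).
  split; intros H.
  - apply (four_point_pos _ _ _ Hd1 Hd2 Hdecr); lra.
  - apply (four_point_neg _ _ _ Hd1 Hd2 Hdecr); lra.
Qed.

Lemma ln_Gamma_defect_sign c a : 0 < a -> 0 < c ->
  (c < 1 -> ln_Gamma_defect c a < 0) /\ (1 < c -> 0 < ln_Gamma_defect c a).
Proof.
  intros Ha Hc. assert (Hl := is_lim_seq_ln_Gamma_defect_series c a Ha Hc).
  assert (Hsign := fun j => four_point_neg_ln_sign c (a + INR j) ltac:(generalize (pos_INR j); lra) Hc).
  split; intros H.
  - apply Rle_lt_trans with (- / 2 * four_point (fun t => - ln t) c c (a + INR 0)).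
    + apply (series_le_first_term (fun j => - / 2 * four_point (fun t => - ln t) c c (a + INR j)));
        [intros j; generalize (proj1 (Hsign j) H) |]; auto; lra.
    + generalize (proj1 (Hsign O) H). lra.
  - apply Rlt_le_trans with (- / 2 * four_point (fun t => - ln t) c c (a + INR 0)).
    + generalize (proj2 (Hsign O) H). lra.
    + apply (first_term_le_series (fun j => - / 2 * four_point (fun t => - ln t) c c (a + INR j)));
        [intros j; generalize (proj2 (Hsign j) H) |]; auto; lra.
Qed.

Lemma Gamma_ratio_power_eq a b : 0 < a -> 0 < b ->
  Rpower (Gamma b / Gamma a) (1 / (b - a)) = exp ((ln_Gamma b - ln_Gamma a) / (b - a)).
Proof.
  intros Ha Hb. unfold Rpower, ln_Gamma. rewrite ln_div by (apply Gamma_pos; auto).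
  f_equal. unfold Rdiv. ring.
Qed.

Lemma sqrt_power_eq a b : 0 < a -> 0 < b ->
  sqrt (a * b) * Rpower (a / b) (1 / (2 * (b - a)))
  = exp ((ln a + ln b) / 2 + (ln a - ln b) / (2 * (b - a))).
Proof.
  intros Ha Hb. rewrite <- Rpower_sqrt by (apply Rmult_lt_0_compat; auto).
  unfold Rpower. rewrite <- exp_plus. f_equal.
  rewrite ln_mult, ln_div by auto. unfold Rdiv. ring.
Qed.


Lemma ln_Gamma_slope_sub_log_mean a b : 0 < a -> 0 < b -> a <> b ->
  (ln_Gamma b - ln_Gamma a) / (b - a) - ((ln a + ln b) / 2 + (ln a - ln b) / (2 * (b - a)))
  = ln_Gamma_defect (Rabs (b - a)) (Rmin a b) / Rabs (b - a).
Proof.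
  intros Ha Hb Hab. unfold ln_Gamma_defect. destruct (Rlt_or_le a b).
  - rewrite Rabs_right, Rmin_left by lra. replace (a + (b - a)) with b by ring. field. lra.
  - rewrite Rabs_left, Rmin_right by lra. replace (b + - (b - a)) with a by ring. field. lra.
Qed.

Lemma ln_Gamma_slope_vs_log_mean a b : 0 < a -> 0 < b -> a <> b ->
  let slope := (ln_Gamma b - ln_Gamma a) / (b - a) in
  let mean := (ln a + ln b) / 2 + (ln a - ln b) / (2 * (b - a)) in
  (Rabs (b - a) < 1 -> slope < mean) /\ (1 < Rabs (b - a) -> mean < slope).
Proof.
  intros Ha Hb Hab slope mean.
  assert (E := ln_Gamma_slope_sub_log_mean a b Ha Hb Hab). fold slope mean in E.
  assert (Hd : 0 < Rabs (b - a)) by (apply Rabs_pos_lt; lra).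
  destruct (ln_Gamma_defect_sign (Rabs (b - a)) (Rmin a b) ltac:(apply Rmin_pos; auto) Hd)
    as [Hsmall Hlarge].
  split; intros Hr.
  - assert (ln_Gamma_defect (Rabs (b - a)) (Rmin a b) / Rabs (b - a) < 0)
      by (apply Rdiv_neg_pos; auto). lra.
  - assert (0 < ln_Gamma_defect (Rabs (b - a)) (Rmin a b) / Rabs (b - a))
      by (apply Rdiv_lt_0_compat; auto). lra.
Qed.

Lemma holds_all_iff_small c be ga : 0 < c < 1 ->
  holds_all c be ga <-> be <= 1 /\ ga >= 1 / c.
Proof.
  intros Hc. rewrite holds_all_iff_gap, gap_signs_iff_small by lra.
  rewrite (Rmult_comm c be), Rle_div_r, Rdiv_diag, (Rmult_comm c ga), <- Rle_div_l by lra.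
  split; intros [H1 H2]; split; lra.
Qed.

Lemma holds_all_iff_large c be ga : 1 < c ->
  holds_all c be ga <-> be <= 1 / c /\ ga >= 1.
Proof.
  intros Hc. rewrite holds_all_iff_gap, gap_signs_iff_large by lra.
  rewrite (Rmult_comm c be), Rle_div_r, (Rmult_comm c ga), <- Rle_div_l, Rdiv_diag by lra.
  split; intros [H1 H2]; split; lra.
Qed.

Theorem theorem3 :
  (forall a b : R, 0 < a -> 0 < b -> a <> b ->
     (0 < Rabs (b - a) < 1 ->
        Rpower (Gamma b / Gamma a) (1 / (b - a))
        < sqrt (a * b) * Rpower (a / b) (1 / (2 * (b - a)))) /\
     (Rabs (b - a) > 1 ->
        Rpower (Gamma b / Gamma a) (1 / (b - a))
        > sqrt (a * b) * Rpower (a / b) (1 / (2 * (b - a)))))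
  /\
  (forall c beta gam : R, c <> 0 ->
     (0 < Rabs c < 1 ->
        (holds_all c beta gam <-> beta <= 1 /\ gam >= 1 / Rabs c)) /\
     (Rabs c > 1 ->
        (holds_all c beta gam <-> beta <= 1 / Rabs c /\ gam >= 1))).
Proof.
  split.
  - intros a b Ha Hb Hab. rewrite Gamma_ratio_power_eq, sqrt_power_eq by auto.
    destruct (ln_Gamma_slope_vs_log_mean a b Ha Hb Hab) as [Hsmall Hlarge].
    split; intros Hr; apply exp_increasing; [apply Hsmall | apply Hlarge]; lra.
  - intros c be ga Hc. rewrite holds_all_abs. split; intros Hr.
    + apply holds_all_iff_small; auto.
    + apply holds_all_iff_large; auto.
Qed.
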